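(* Let $g:\mathbb{R}^m\to\overline{\mathbb{R}}$ be a polyhedral function and $(\bar z,\bar\lambda)\in\mathrm{gph}\,\partial g$, and write $K=K_g(\bar z,\bar\lambda)$. Then: (a) $\mathrm{gph}\, D(\partial g)(\bar z,\bar\lambda)=T_{\mathrm{gph}\,\partial g}(\bar z,\bar\lambda)=\mathrm{gph}\, N_K$; (b) $\mathrm{gph}\, D_*(\partial g)(\bar z,\bar\lambda)=\mathrm{gph}\, N_K-\mathrm{gph}\, N_K$; (c) $\bar\lambda\in\mathrm{ri}\,\partial g(\bar z)$ if and only if there exists a neighborhood $O$ of $(\bar z,\bar\lambda)$ such that for every $(z,\lambda)\in O\cap\mathrm{gph}\,\partial g$, the mapping $\partial g$ is strictly proto-differentiable at $z$ for $\lambda$ and $D_*(\partial g)(z,\lambda)=D(\partial g)(z,\lambda)$.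
   Context: A proper function $g:\mathbb{R}^m\to\overline{\mathbb{R}}$ is polyhedral if its epigraph is a polyhedral convex set; $\partial g$ is the convex-analysis subdifferential; $\mathrm{ri}$ is relative interior. For $z$ with $g(z)$ finite, ${\rm d} g(z)(w)=\liminf_{t\searrow 0,\,w'\to w}\frac{g(z+tw')-g(z)}{t}$ and for $\lambda\in\partial g(z)$ the critical cone is $K_g(z,\lambda)=\{w\mid\langle\lambda,w\rangle={\rm d} g(z)(w)\}$. $N_K$ is the convex-analysis normal cone mapping of the convex cone $K$. Set limits are in the Painlevé–Kuratowski sense. For a set $\Omega$ and $\bar x\in\Omega$, the tangent cone is $T_\Omega(\bar x)=\limsup_{t\searrow0}(\Omega-\bar x)/t$. For a set-valued map $F:\mathbb{R}^n\rightrightarrows\mathbb{R}^m$ and $(\bar x,\bar y)\in\mathrm{gph}\, F$: the graphical derivative $DF(\bar x,\bar y)$ has graph $T_{\mathrm{gph}\, F}(\bar x,\bar y)$; the strict graphical derivative $D_*F(\bar x,\bar y)$ has graph $\limsup_{t\searrow0,\,(x,y)\to(\bar x,\bar y),\,(x,y)\in\mathrm{gph}\, F}\frac{\mathrm{gph}\, F-(x,y)}{t}$; $F$ is strictly proto-differentiable at $\bar x$ for $\bar y$ if this outer limit is actually a full limit (i.e., equals the corresponding inner limit). *)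

From HB Require Import structures.
From mathcomp Require Import all_boot all_order all_algebra.
From mathcomp Require Import all_classical all_reals.
From mathcomp Require Import ereal.
Set Implicit Arguments. Unset Strict Implicit. Unset Printing Implicit Defensive.
Import Order.TTheory GRing.Theory Num.Theory.
Local Open Scope classical_set_scope.
Local Open Scope ring_scope.

Definition dotv {R : realType} {m : nat} (u v : 'rV[R]_m) : R :=
  \sum_(i < m) u ord0 i * v ord0 i.

(* sup norm on R^m (all norms are equivalent: limits/neighborhoods do not depend on it) *)
Definition nrmv {R : realType} {m : nat} (u : 'rV[R]_m) : R :=
  \big[Num.max/0]_(i < m) `|u ord0 i|.

Definition psub {R : realType} {m : nat} (p q : 'rV[R]_m * 'rV[R]_m) :=
  (p.1 - q.1, p.2 - q.2).
Definition pscale {R : realType} {m : nat} (t : R) (p : 'rV[R]_m * 'rV[R]_m) :=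
  (t *: p.1, t *: p.2).
Definition pdist {R : realType} {m : nat} (p q : 'rV[R]_m * 'rV[R]_m) : R :=
  Num.max (nrmv (p.1 - q.1)) (nrmv (p.2 - q.2)).

Definition proper_fun {R : realType} {m : nat} (g : 'rV[R]_m -> \bar R) :=
  (forall x, g x <> -oo%E) /\ (exists x, g x <> +oo%E).

Definition epigraph {R : realType} {m : nat} (g : 'rV[R]_m -> \bar R)
  : set ('rV[R]_m * R) := [set p | (g p.1 <= p.2%:E)%E].

Definition polyhedral_set {R : realType} {m : nat} (S : set ('rV[R]_m * R)) :=
  exists (k : nat) (a : 'I_k -> 'rV[R]_m) (b c : 'I_k -> R),
    S = [set p | forall i, dotv (a i) p.1 + b i * p.2 <= c i].

Definition polyhedral_fun {R : realType} {m : nat} (g : 'rV[R]_m -> \bar R) :=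
  proper_fun g /\ polyhedral_set (epigraph g).

Definition subdiff {R : realType} {m : nat} (g : 'rV[R]_m -> \bar R) (z : 'rV[R]_m)
  : set 'rV[R]_m :=
  [set l | g z \is a fin_num /\ forall x, (g z + (dotv l (x - z))%:E <= g x)%E].

Definition gph_subdiff {R : realType} {m : nat} (g : 'rV[R]_m -> \bar R)
  : set ('rV[R]_m * 'rV[R]_m) := [set p | subdiff g p.1 p.2].

(* subderivative dg(z)(w) = liminf_{t \searrow 0, w' -> w} (g(z+tw') - g(z))/t *)
Definition subderiv {R : realType} {m : nat} (g : 'rV[R]_m -> \bar R) (z w : 'rV[R]_m)
  : \bar R :=
  ereal_sup [set ereal_inf
      [set ((g (z + q.1 *: q.2)%R - g z) * (q.1^-1)%:E)%E
        | q in [set q : R * 'rV[R]_m | 0 < q.1 < e /\ nrmv (q.2 - w) < e]]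
    | e in [set e : R | 0 < e]].

Definition critical_cone {R : realType} {m : nat} (g : 'rV[R]_m -> \bar R) (z l : 'rV[R]_m)
  : set 'rV[R]_m := [set w | (dotv l w)%:E = subderiv g z w].

Definition gph_normal_cone {R : realType} {m : nat} (K : set 'rV[R]_m)
  : set ('rV[R]_m * 'rV[R]_m) :=
  [set p | K p.1 /\ forall w, K w -> dotv p.2 (w - p.1) <= 0].

Definition mdiff {R : realType} {m : nat} (A B : set ('rV[R]_m * 'rV[R]_m))
  : set ('rV[R]_m * 'rV[R]_m) :=
  [set v | exists a b, A a /\ B b /\ v = psub a b].

(* tangent cone T_S(pb) = Painleve-Kuratowski outer limit of (S - pb)/t, t \searrow 0 *)
Definition tangent_cone {R : realType} {m : nat} (S : set ('rV[R]_m * 'rV[R]_m))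
  (pb : 'rV[R]_m * 'rV[R]_m) : set ('rV[R]_m * 'rV[R]_m) :=
  [set v | forall e d : R, 0 < e -> 0 < d ->
     exists (t : R) q, 0 < t < d /\ S q /\ pdist (pscale t^-1 (psub q pb)) v < e].

(* graph of the graphical derivative DF(xb,yb), for S = gph F *)
Definition gph_gderiv {R : realType} {m : nat} (S : set ('rV[R]_m * 'rV[R]_m))
  (pb : 'rV[R]_m * 'rV[R]_m) := tangent_cone S pb.

(* graph of the strict graphical derivative D_*F(xb,yb), for S = gph F:
   outer limit of (S - q)/t as t \searrow 0, q -> pb, q in S *)
Definition gph_sgderiv {R : realType} {m : nat} (S : set ('rV[R]_m * 'rV[R]_m))
  (pb : 'rV[R]_m * 'rV[R]_m) : set ('rV[R]_m * 'rV[R]_m) :=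
  [set v | forall e d : R, 0 < e -> 0 < d ->
     exists (t : R) q q', 0 < t < d /\ S q /\ pdist q pb < d /\ S q' /\
       pdist (pscale t^-1 (psub q' q)) v < e].

(* corresponding inner limit *)
Definition gph_sgderiv_inner {R : realType} {m : nat} (S : set ('rV[R]_m * 'rV[R]_m))
  (pb : 'rV[R]_m * 'rV[R]_m) : set ('rV[R]_m * 'rV[R]_m) :=
  [set v | forall e : R, 0 < e -> exists d : R, 0 < d /\
     forall (t : R) q, 0 < t < d -> S q -> pdist q pb < d ->
       exists q', S q' /\ pdist (pscale t^-1 (psub q' q)) v < e].

Definition strictly_proto_diff {R : realType} {m : nat} (S : set ('rV[R]_m * 'rV[R]_m))
  (pb : 'rV[R]_m * 'rV[R]_m) := gph_sgderiv S pb = gph_sgderiv_inner S pb.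

Definition aff_hull {R : realType} {m : nat} (C : set 'rV[R]_m) : set 'rV[R]_m :=
  [set x | exists (n : nat) (pts : 'I_n -> 'rV[R]_m) (mu : 'I_n -> R),
     (forall i, C (pts i)) /\ \sum_(i < n) mu i = 1 /\ x = \sum_(i < n) mu i *: pts i].

Definition rel_int {R : realType} {m : nat} (C : set 'rV[R]_m) : set 'rV[R]_m :=
  [set x | C x /\ exists e : R, 0 < e /\
     forall y, aff_hull C y -> nrmv (y - x) < e -> C y].

(* Write epi g as finitely many inequalities <a_i, x> + b_i t <= c_i.  Near zb,
   g (zb + w) = g zb + h w on a polyhedral cone C and g = +oo off zb + C, where h is
   the maximum of the slopes of the constraints active at (zb, g zb) with b_i < 0;
   so h is the subderivative of g at zb and the critical cone is
   K = {w in C | h w = <lb, w>}.  Fourier-Motzkin elimination yields the theorems of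
   Weyl, Minkowski and Farkas, by which the linear minorants of h near lb form a
   polyhedron that is a cone near lb; hence near (zb, lb) the graph of the
   subdifferential is (zb, lb) + gph N_K.  A set that is locally a translated closed
   cone G has tangent cone G and strict graphical derivative G - G as soon as G - G is
   closed; this holds here because gph N_K is the finite union, over the faces F of K,
   of the products of F with the cone generated by the normals active on F.  Finally
   lb is in ri (subdiff g zb) iff the polar of K is symmetric, i.e. K is a subspace:
   then gph N_K is a subspace and the local description persists around every nearby
   point of the graph, where D_* = D; conversely D_* = D at (zb, lb) says
   gph N_K - gph N_K = gph N_K, which forces the polar of K to be symmetric. *)

From HB Require Import structures.
From mathcomp Require Import all_boot all_order all_algebra.
From mathcomp Require Import all_classical all_reals.
From mathcomp Require Import ereal.
From mathcomp Require Import ring lra.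
Import Order.TTheory GRing.Theory Num.Theory.
Local Open Scope classical_set_scope.
Local Open Scope ring_scope.
Set Implicit Arguments. Unset Strict Implicit. Unset Printing Implicit Defensive.

Lemma min_le_l (R : realDomainType) (x y : R) : Num.min x y <= x.
Proof. by rewrite ge_min lexx. Qed.

Lemma min_le_r (R : realDomainType) (x y : R) : Num.min x y <= y.
Proof. by rewrite ge_min lexx orbT. Qed.

Section RowVectors.
Variables (R : realType) (m : nat).
Implicit Types (u v w x y : 'rV[R]_m) (a : R).

Lemma dotvC u v : dotv u v = dotv v u.
Proof. by apply: eq_bigr => i _; rewrite mulrC. Qed.

Lemma dotvDl u v w : dotv (u + v) w = dotv u w + dotv v w.
Proof. by rewrite /dotv -big_split; apply: eq_bigr => i _; rewrite !mxE mulrDl. Qed.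

Lemma dotvDr u v w : dotv w (u + v) = dotv w u + dotv w v.
Proof. by rewrite dotvC dotvDl !(dotvC w). Qed.

Lemma dotvZl a u v : dotv (a *: u) v = a * dotv u v.
Proof. by rewrite /dotv mulr_sumr; apply: eq_bigr => i _; rewrite !mxE mulrA. Qed.

Lemma dotvZr a u v : dotv v (a *: u) = a * dotv v u.
Proof. by rewrite dotvC dotvZl dotvC. Qed.

Lemma dotv0l v : dotv 0 v = 0.
Proof. by rewrite -(scale0r 0) dotvZl mul0r. Qed.

Lemma dotv0r v : dotv v 0 = 0.
Proof. by rewrite dotvC dotv0l. Qed.

Lemma dotvNl u v : dotv (- u) v = - dotv u v.
Proof. by rewrite -scaleN1r dotvZl mulN1r. Qed.

Lemma dotvNr u v : dotv v (- u) = - dotv v u.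
Proof. by rewrite dotvC dotvNl dotvC. Qed.

Lemma dotvBl u v w : dotv (u - v) w = dotv u w - dotv v w.
Proof. by rewrite dotvDl dotvNl. Qed.

Lemma dotvBr u v w : dotv w (u - v) = dotv w u - dotv w v.
Proof. by rewrite dotvDr dotvNr. Qed.

Lemma dotv_suml (I : finType) (F : I -> 'rV[R]_m) v :
  dotv (\sum_i F i) v = \sum_i dotv (F i) v.
Proof. by rewrite (big_morph (dotv^~ v) (fun x1 x2 => dotvDl x1 x2 v) (dotv0l v)). Qed.

Lemma dotv_delta (j : 'I_m) v : dotv (delta_mx 0 j) v = v ord0 j.
Proof.
rewrite /dotv (bigD1 j) //= mxE eqxx mul1r big1 ?addr0 // => l /negbTE lj.
by rewrite mxE lj andbF mul0r.
Qed.

Definition norm1v y := \sum_(i < m) `|y ord0 i|.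

Lemma norm1v_ge0 y : 0 <= norm1v y.
Proof. exact: sumr_ge0. Qed.

Lemma nrmv_ge0 u : 0 <= nrmv u.
Proof. by rewrite /nrmv; elim/big_ind: _ => // x1 x2; rewrite le_max => ->. Qed.

Lemma coord_le_nrmv u i : `|u ord0 i| <= nrmv u.
Proof. exact: le_bigmax. Qed.

Lemma nrmv_le u c : 0 <= c -> (forall i, `|u ord0 i| <= c) -> nrmv u <= c.
Proof. by move=> c0 h; apply: bigmax_le. Qed.

Lemma nrmv0 : nrmv (0 : 'rV[R]_m) = 0.
Proof.
apply/eqP; rewrite eq_le nrmv_ge0 andbT.
by apply: nrmv_le => // i; rewrite mxE normr0.
Qed.

Lemma nrmvD u v : nrmv (u + v) <= nrmv u + nrmv v.
Proof.
apply: nrmv_le => [|i]; first by rewrite addr_ge0 // nrmv_ge0.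
by rewrite mxE (le_trans (ler_normD _ _)) // lerD // coord_le_nrmv.
Qed.

Lemma nrmvZ a u : nrmv (a *: u) = `|a| * nrmv u.
Proof.
have le a' u' : nrmv (a' *: u') <= `|a'| * nrmv u'.
  apply: nrmv_le => [|i]; first by rewrite mulr_ge0 // nrmv_ge0.
  by rewrite mxE normrM ler_wpM2l // coord_le_nrmv.
apply/eqP; rewrite eq_le le /=.
have [->|a0] := eqVneq a 0; first by rewrite normr0 mul0r nrmv_ge0.
have := le a^-1 (a *: u); rewrite scalerA mulVf // scale1r normfV.
by rewrite ler_pdivlMl ?normr_gt0.
Qed.

Lemma nrmvN u : nrmv (- u) = nrmv u.
Proof. by rewrite -scaleN1r nrmvZ normrN1 mul1r. Qed.

Lemma nrmv_subC u v : nrmv (u - v) = nrmv (v - u).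
Proof. by rewrite -nrmvN opprB. Qed.

Lemma normr_dotv_le y x : `|dotv y x| <= norm1v y * nrmv x.
Proof.
rewrite /dotv /norm1v mulr_suml (le_trans (ler_norm_sum _ _ _)) //.
by apply: ler_sum => i _; rewrite normrM ler_wpM2l // coord_le_nrmv.
Qed.

Lemma dotv_le_norm y x : dotv y x <= norm1v y * nrmv x.
Proof. exact: le_trans (ler_norm _) (normr_dotv_le y x). Qed.

Lemma dotv_lipschitz y u v : dotv y u <= dotv y v + norm1v y * nrmv (u - v).
Proof. by rewrite -lerBlDl -dotvBr dotv_le_norm. Qed.

Lemma nrmv_scale_lt v e : 0 < e -> exists2 s, 0 < s & nrmv (s *: v) < e.
Proof.
move=> e0; have n0 := nrmv_ge0 v.
exists (e / (2 * (nrmv v + 1))); first by rewrite divr_gt0 // mulr_gt0; lra.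
rewrite nrmvZ ger0_norm ?divr_ge0 ?ltW //; last by rewrite mulr_gt0; lra.
by rewrite mulrAC ltr_pdivrMr; [nra|lra].
Qed.

Lemma convexE th x y : th *: x + (1 - th) *: y = y + th *: (x - y).
Proof. by rewrite scalerBl scale1r scalerBr addrCA. Qed.

Lemma segment_start_in_ball r w x : nrmv w < r ->
  exists th, 0 < th <= 1 /\ nrmv (w + th *: (x - w)) < r.
Proof.
move=> hw; have n0 := nrmv_ge0 (x - w).
pose th := Num.min 1 ((r - nrmv w) / (nrmv (x - w) + 1)).
have th0 : 0 < th by rewrite lt_min ltr01 /= divr_gt0 //; lra.
exists th; rewrite th0 min_le_l; split => //.
apply: le_lt_trans (nrmvD _ _) _; rewrite nrmvZ ger0_norm ?ltW //.
have : th * nrmv (x - w) <= (r - nrmv w) / (nrmv (x - w) + 1) * nrmv (x - w).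
  by rewrite ler_wpM2r // min_le_r.
have : (r - nrmv w) / (nrmv (x - w) + 1) * nrmv (x - w) < r - nrmv w.
  by rewrite mulrAC ltr_pdivrMr; [nra|lra].
lra.
Qed.

End RowVectors.

Section Pairs.
Variables (R : realType) (m : nat).
Notation Pt := ('rV[R]_m * 'rV[R]_m)%type.
Implicit Types (p q r : Pt).

Definition pzero : Pt := (0, 0).
Definition padd p q : Pt := (p.1 + q.1, p.2 + q.2).
Definition pnorm p := pdist p pzero.

Lemma pdist_ge0 p q : 0 <= pdist p q.
Proof. by rewrite le_max nrmv_ge0. Qed.

Lemma pnorm_ge0 p : 0 <= pnorm p.
Proof. exact: pdist_ge0. Qed.

Lemma pdistxx p : pdist p p = 0.
Proof. by rewrite /pdist !subrr nrmv0 maxxx. Qed.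

Lemma pdist_lt p q c :
  (pdist p q < c) <-> (nrmv (p.1 - q.1) < c /\ nrmv (p.2 - q.2) < c).
Proof. by rewrite /pdist gt_max; split => [/andP[]|[-> ->]]. Qed.

Lemma nrmv1_le_pdist p q : nrmv (p.1 - q.1) <= pdist p q.
Proof. by rewrite le_max lexx. Qed.

Lemma nrmv2_le_pdist p q : nrmv (p.2 - q.2) <= pdist p q.
Proof. by rewrite le_max lexx orbT. Qed.

Lemma pdistE p q : pdist p q = pnorm (psub p q).
Proof. by rewrite /pnorm /pdist /psub /= !subr0. Qed.

Lemma pnormD p q : pnorm (padd p q) <= pnorm p + pnorm q.
Proof.
rewrite /pnorm /pdist /padd /= !subr0 ge_max.
by apply/andP; split; rewrite (le_trans (nrmvD _ _)) // lerD // le_max lexx ?orbT.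
Qed.

Lemma pdist_triangle p q r : pdist p r <= pdist p q + pdist q r.
Proof.
rewrite !pdistE (_ : psub p r = padd (psub p q) (psub q r)) ?pnormD //.
by rewrite /padd /psub /=; congr (_, _); rewrite addrA subrK.
Qed.

Lemma pnormZ t p : 0 <= t -> pnorm (pscale t p) = t * pnorm p.
Proof.
by move=> t0; rewrite /pnorm /pdist /pscale /= !subr0 !nrmvZ ger0_norm // maxr_pMr.
Qed.

Lemma psub_padd p x : psub (padd p x) p = x.
Proof. by case: x => x1 x2; rewrite /psub /padd /= !(addrC p.1) !(addrC p.2) !addrK. Qed.

Lemma pdist_padd p x : pdist (padd p x) p = pnorm x.
Proof. by rewrite pdistE psub_padd. Qed.

Lemma psub_padd2 p x y : psub (padd p x) (padd p y) = psub x y.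
Proof. by rewrite /psub /padd /=; congr (_, _); rewrite opprD addrACA subrr add0r. Qed.

Lemma pscaleK t p : t != 0 -> pscale t^-1 (pscale t p) = p.
Proof. by move=> t0; case: p => p1 p2; rewrite /pscale /= !scalerA mulVf // !scale1r. Qed.

Lemma psub_pscale t p q : psub (pscale t p) (pscale t q) = pscale t (psub p q).
Proof. by rewrite /psub /pscale /= !scalerBr. Qed.

Lemma psub_trans t q' q p :
  pscale t (psub q' q) = psub (pscale t (psub q' p)) (pscale t (psub q p)).
Proof. by rewrite psub_pscale /psub /=; congr (pscale _ (_, _)); rewrite opprB addrA subrK. Qed.

Lemma pnorm_le_near t x v e :
  0 < t -> pdist (pscale t^-1 x) v < e -> pnorm x <= t * (pnorm v + e).
Proof.
move=> t0 h; have : pnorm (pscale t^-1 x) <= pnorm v + e.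
  apply: le_trans (pdist_triangle _ v _) _.
  by rewrite addrC lerD2l ltW.
rewrite pnormZ; last by rewrite invr_ge0 ltW.
by rewrite -ler_pdivrMl // mulrC.
Qed.

End Pairs.

Arguments pzero {R m}.

(** * Fourier-Motzkin elimination and polyhedra *)

Lemma sum_delta (R : pzRingType) (I : finType) (k : I) (F : I -> R) :
  \sum_l (l == k)%:R * F l = F k.
Proof. by rewrite (bigD1 k) //= eqxx mul1r big1 ?addr0 // => l /negbTE ->; rewrite mul0r. Qed.

Lemma sum_delta1 (R : pzRingType) (I : finType) (k : I) : \sum_l (l == k)%:R = 1 :> R.
Proof. by rewrite -[RHS](sum_delta k (fun=> 1)); apply: eq_bigr => l _; rewrite mulr1. Qed.

Lemma sum_deltaZ (R : pzRingType) (V : lmodType R) (I : finType) (k : I) (F : I -> V) :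
  \sum_l (l == k)%:R *: F l = F k.
Proof. by rewrite (bigD1 k) //= eqxx scale1r big1 ?addr0 // => l /negbTE ->; rewrite scale0r. Qed.

Section FourierMotzkin.
Variable R : realType.

(* Fourier-Motzkin multipliers for eliminating y from [f i + b i * y <= 0]:
   one row [b i * row k - b k * row i] per pair with [b i > 0 > b k],
   and the rows with [b i = 0] kept as they are. *)
Definition fm_mult (I : finType) (b : I -> R) (j : (I * I) + I) (l : I) : R :=
  match j with
  | inl (i, k) =>
      if (0 < b i) && (b k < 0) then b i * (l == k)%:R - b k * (l == i)%:R else 0
  | inr i => if b i == 0 then (l == i)%:R else 0
  end.

Lemma fm_mult_sum (I : finType) (b f : I -> R) j :
  \sum_l fm_mult b j l * f l =
  match j with
  | inl (i, k) => if (0 < b i) && (b k < 0) then b i * f k - b k * f i else 0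
  | inr i => if b i == 0 then f i else 0
  end.
Proof.
case: j => [[i k]|i] /=; case: ifP => _;
  try by rewrite ?sum_delta // big1 // => l _; rewrite mul0r.
under eq_bigr => l _ do rewrite mulrBl -!(mulrA (b _)).
by rewrite sumrB -!mulr_sumr !sum_delta.
Qed.

Lemma fourier_motzkin_step (I : finType) (b f : I -> R) :
  (exists y, forall i, f i + b i * y <= 0) <->
  (forall j, \sum_l fm_mult b j l * f l <= 0).
Proof.
split=> [[y hy] j|h].
  rewrite fm_mult_sum; case: j => [[i k]|i].
    by case: ifP => // /andP[bi bk]; have := hy i; have := hy k; nra.
  by case: ifP => // /eqP bi; have := hy i; rewrite bi mul0r addr0.
pose lo k := - f k / b k.
have hpair i k : 0 < b i -> b k < 0 -> lo k <= lo i.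
  move=> bi bk; have := h (inl (i, k)); rewrite fm_mult_sum bi bk /= => hik.
  rewrite /lo -subr_le0.
  have -> : - f k / b k - - f i / b i = (b i * f k - b k * f i) / (- (b k * b i)).
    by field; rewrite gt_eqF // lt_eqF.
  by rewrite mulr_le0_ge0 // invr_ge0 oppr_ge0 mulr_le0_ge0 // ltW.
(* any y between the largest lower bound and the least upper bound works *)
pose y0 := \big[Num.min/0]_(i | 0 < b i) lo i.
pose y := \big[Num.max/y0]_(k | b k < 0) lo k.
exists y => l; have [bl|bl|bl] := ltgtP (b l) 0.
- have : lo l <= y by apply: le_bigmax_cond.
  have : lo l * b l = - f l by rewrite /lo mulrVK // unitfE lt_eqF.
  nra.
- have : y <= lo l.
    apply: bigmax_le => [|k bk]; first exact: bigmin_le_cond.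
    exact: hpair.
  have : lo l * b l = - f l by rewrite /lo mulrVK // unitfE gt_eqF.
  nra.
- by have := h (inr l); rewrite fm_mult_sum bl eqxx mul0r addr0.
Qed.

Lemma fourier_motzkin_ord n (I : finType) (B : I -> 'I_n -> R) :
  exists (I' : finType) (C : I' -> I -> R), forall f : I -> R,
    (exists y : 'I_n -> R, forall i, f i + \sum_l B i l * y l <= 0) <->
    (forall j, \sum_i C j i * f i <= 0).
Proof.
elim: n I B => [|n IH] I B.
  exists I, (fun j i => (i == j)%:R) => f.
  under eq_forall => j do rewrite sum_delta.
  split=> [[y hy] i|h]; first by have := hy i; rewrite big_ord0 addr0.
  by exists (fun=> 0) => i; rewrite big_ord0 addr0.
pose w := widen_ord (leqnSn n).
pose C1 := fm_mult (B^~ ord_max).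
pose B' j (l : 'I_n) := \sum_i C1 j i * B i (w l).
have [I' [C2 h2]] := IH _ B'.
exists I', (fun j i => \sum_j1 C2 j j1 * C1 j1 i) => f.
have comb (F : _ -> R) j1 : \sum_i C1 j1 i * (f i + F i) =
    \sum_i C1 j1 i * f i + \sum_i C1 j1 i * F i.
  by rewrite -big_split; apply: eq_bigr => i _; rewrite mulrDr.
have eqB y j1 : \sum_i C1 j1 i * (\sum_l B i (w l) * y l) = \sum_l B' j1 l * y l.
  rewrite /B'; under eq_bigr => i _ do rewrite mulr_sumr.
  rewrite exchange_big; apply: eq_bigr => l _ /=; rewrite mulr_suml.
  by apply: eq_bigr => i _; rewrite mulrA.
have eqC j : \sum_i (\sum_j1 C2 j j1 * C1 j1 i) * f i =
    \sum_j1 C2 j j1 * \sum_i C1 j1 i * f i.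
  under eq_bigr => i _ do rewrite mulr_suml.
  rewrite exchange_big; apply: eq_bigr => j1 _ /=; rewrite mulr_sumr.
  by apply: eq_bigr => i _; rewrite mulrA.
under eq_forall => j do rewrite eqC.
rewrite -h2; split=> [[y hy]|[y hy]].
  exists (y \o w) => j1; rewrite -eqB -comb; move: j1.
  apply/fourier_motzkin_step; exists (y ord_max) => i.
  by have := hy i; rewrite big_ord_recr /= addrA.
have [r hr] : exists r, forall i, (f i + \sum_l B i (w l) * y l) + B i ord_max * r <= 0.
  by apply/fourier_motzkin_step => j1; rewrite comb eqB.
exists (fun l : 'I_n.+1 => if unlift ord_max l is Some l' then y l' else r) => i.
rewrite big_ord_recr /= unlift_none addrA; congr (_ + _ + _ <= 0): (hr i).
apply: eq_bigr => l _; rewrite -/(w l).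
have -> : w l = lift ord_max l by apply: val_inj; exact: (esym (lift_max l)).
by rewrite liftK.
Qed.

Lemma fourier_motzkin (J I : finType) (B : I -> J -> R) :
  exists (I' : finType) (C : I' -> I -> R), forall f : I -> R,
    (exists y : J -> R, forall i, f i + \sum_l B i l * y l <= 0) <->
    (forall j, \sum_i C j i * f i <= 0).
Proof.
have [I' [C h]] := fourier_motzkin_ord (fun i (l : 'I_#|J|) => B i (enum_val l)).
exists I', C => f; rewrite -h.
have reidx (y : J -> R) i :
    \sum_l B i l * y l = \sum_(l < #|J|) B i (enum_val l) * y (enum_val l).
  by rewrite (big_enum_val (A := predT)).
split=> [[y hy]|[y hy]]; first by exists (y \o enum_val) => i; rewrite -reidx.
exists (y \o enum_rank) => i; rewrite reidx.
by under eq_bigr => l _ do rewrite /= enum_valK.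
Qed.

End FourierMotzkin.

Section Polyhedra.
Variables (R : realType) (m : nat).
Notation V := 'rV[R]_m.
Implicit Types (u v w x y : V).

Lemma polyhedron_projection (J I : finType) (y : I -> V) (k : I -> R)
    (B : I -> J -> R) :
  exists (I' : finType) (y' : I' -> V) (k' : I' -> R), forall x,
    (exists z : J -> R, forall i, dotv (y i) x + k i + \sum_l B i l * z l <= 0) <->
    (forall j, dotv (y' j) x + k' j <= 0).
Proof.
have [I' [C h]] := fourier_motzkin B.
exists I', (fun j => \sum_i C j i *: y i), (fun j => \sum_i C j i * k i) => x.
have comb j : \sum_i C j i * (dotv (y i) x + k i) =
    dotv (\sum_i C j i *: y i) x + \sum_i C j i * k i.
  by rewrite dotv_suml -big_split; apply: eq_bigr => i _; rewrite dotvZl mulrDr.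
by rewrite h; split=> hx j; [rewrite -comb | rewrite comb].
Qed.

Lemma signed_le0 (a : R) : (forall s : bool, (-1) ^+ s * a <= 0) <-> a = 0.
Proof.
split=> [h|-> s]; last by rewrite mulr0.
by have := h false; have := h true; rewrite expr0 expr1 mulN1r mul1r; lra.
Qed.

Section ConvCone.
Variables (IA IJ : finType) (p : IA -> V) (d : IJ -> V).

Definition convcone v :=
  exists (mu : IA -> R) (nu : IJ -> R),
    [/\ forall i, 0 <= mu i, forall j, 0 <= nu j, \sum_i mu i = 1 &
        v = \sum_i mu i *: p i + \sum_j nu j *: d j].

(* The linear system in the weights [z] describing conv(p) + cone(d): [z >= 0],
   the point weights sum to 1, and [v = \sum_l z l *: gen l]; each equation is
   written as two inequalities of opposite signs. *)
Let gen (l : IA + IJ) : V := match l with inl i => p i | inr j => d j end.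
Let row := (((IA + IJ) + bool) + ('I_m * bool))%type.
Let sg (s : bool) : R := (-1) ^+ s.
Let y (i : row) : V := if i is inr (c, s) then sg s *: delta_mx 0 c else 0.
Let k (i : row) : R := if i is inl (inr s) then - sg s else 0.
Let B (i : row) (l : IA + IJ) : R :=
  match i with
  | inl (inl l') => - (l == l')%:R
  | inl (inr s) => if l is inl _ then sg s else 0
  | inr (c, s) => - sg s * gen l 0 c
  end.

Let sumB (z : IA + IJ -> R) i : \sum_l B i l * z l =
  match i with
  | inl (inl l') => - z l'
  | inl (inr s) => sg s * \sum_(i : IA) z (inl i)
  | inr (c, s) => - sg s * (\sum_l z l *: gen l) 0 c
  end.
Proof.
case: i => [[l'|s]|[c s]] /=.
- by under eq_bigr => l _ do rewrite mulNr; rewrite sumrN sum_delta.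
- rewrite big_sumType /= [X in _ + X]big1 ?addr0 ?mulr_sumr // => j _.
  by rewrite mul0r.
- rewrite summxE mulr_sumr; apply: eq_bigr => l _.
  by rewrite mxE [z l * _]mulrC mulrA.
Qed.

Let sum_gen (z : IA + IJ -> R) :
  \sum_l z l *: gen l = \sum_i z (inl i) *: p i + \sum_j z (inr j) *: d j.
Proof. by rewrite big_sumType. Qed.

Lemma convcone_polyhedral : exists (I' : finType) (y' : I' -> V) (k' : I' -> R),
  forall v, convcone v <-> (forall j, dotv (y' j) v + k' j <= 0).
Proof.
have [I' [y' [k' h]]] := polyhedron_projection y k B.
exists I', y', k' => v; rewrite -h.
split=> [[mu [nu [mu0 nu0 mu1 ->]]]|[z hz]].
  exists (fun l => match l with inl i => mu i | inr j => nu j end).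
  case=> [[l|s]|[c s]]; rewrite sumB /=.
  - by rewrite dotv0l !add0r oppr_le0; case: l.
  - by rewrite dotv0l add0r mu1 mulr1 addNr.
  - by rewrite addr0 dotvZl dotv_delta sum_gen mulNr -mulrBr subrr mulr0.
exists (fun i => z (inl i)), (fun j => z (inr j)); split.
- by move=> i; have := hz (inl (inl (inl i))); rewrite sumB /= dotv0l !add0r oppr_le0.
- by move=> j; have := hz (inl (inl (inr j))); rewrite sumB /= dotv0l !add0r oppr_le0.
- apply/eqP; rewrite -subr_eq0; apply/eqP/signed_le0 => s.
  by have := hz (inl (inr s)); rewrite sumB /= dotv0l add0r addrC mulrBr mulr1.
- rewrite -sum_gen; apply/rowP => c; apply/eqP; rewrite -subr_eq0; apply/eqP.
  apply/signed_le0 => s; have := hz (inr (c, s)).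
  by rewrite sumB /= addr0 dotvZl dotv_delta mulNr -mulrBr.
Qed.

End ConvCone.

Lemma ray_le0 (a k : R) : (forall t, 0 <= t -> t * a + k <= 0) -> a <= 0.
Proof.
move=> h; have := h 0 (lexx 0); rewrite mul0r add0r => k0.
rewrite leNgt; apply/negP => a0.
have t0 : 0 <= (1 - k) / a by rewrite divr_ge0 // ?ltW //; lra.
by have := h _ t0; rewrite mulfVK ?gt_eqF //; lra.
Qed.

Lemma convcone_point (IA IJ : finType) (p : IA -> V) (d : IJ -> V) i j t :
  0 <= t -> convcone p d (p i + t *: d j).
Proof.
move=> t0; exists (fun i' => (i' == i)%:R), (fun j' => t * (j' == j)%:R); split.
- by move=> i'; case: (_ == _).
- by move=> j'; rewrite mulr_ge0 //; case: (_ == _).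
- exact: sum_delta1.
by under [X in _ = _ + X]eq_bigr => j' _ do rewrite -scalerA; rewrite -scaler_sumr !sum_deltaZ.
Qed.

Lemma convcone_farkas (IA IJ : finType) (p : IA -> V) (d : IJ -> V) v :
  (forall y k, (forall i, dotv (p i) y + k <= 0) -> (forall j, dotv (d j) y <= 0) ->
     dotv v y + k <= 0) ->
  convcone p d v.
Proof.
move=> hv; have [I' [y [k h]]] := convcone_polyhedral p d; apply/h => j.
have [i0 _|IA0] := pickP (@predT IA); last first.
  have := hv 0 1 (fun i => ltac:(by have := IA0 i)) (fun l => ltac:(by rewrite dotv0r)).
  by rewrite dotv0r add0r ler10.
rewrite dotvC; apply: hv => [i|l].
  have /h/(_ j) : convcone p d (p i).
    exists (fun i' => (i' == i)%:R), (fun=> 0).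
    split; [by move=> i'; case: (_ == _) | by [] | exact: sum_delta1 |].
    by rewrite sum_deltaZ big1 ?addr0 // => l _; rewrite scale0r.
  by rewrite dotvC.
apply: (@ray_le0 _ (dotv (y j) (p i0) + k j)) => t t0.
have /h/(_ j) := convcone_point p d i0 l t0.
rewrite dotvDr dotvZr (dotvC (y j) (d l)); lra.
Qed.

Definition gen_cone (I : finType) (u : I -> V) v :=
  exists nu : I -> R, (forall i, 0 <= nu i) /\ v = \sum_i nu i *: u i.

Lemma gen_cone_convcone (I : finType) (u : I -> V) v :
  gen_cone u v <-> convcone (fun _ : unit => 0) u v.
Proof.
have sum0 (mu : unit -> R) : \sum_i mu i *: (0 : V) = 0.
  by rewrite big1 // => i _; rewrite scaler0.
split=> [[nu [nu0 ->]]|[mu [nu [_ nu0 _ ->]]]]; last by exists nu; rewrite sum0 add0r.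
exists (fun=> 1), nu; split => //; last by rewrite sum0 add0r.
by rewrite big_const card_unit /= addr0.
Qed.

Lemma gen_cone0 (I : finType) (u : I -> V) : gen_cone u 0.
Proof. by exists (fun=> 0); split => //; rewrite big1 // => i _; rewrite scale0r. Qed.

Lemma gen_coneZ (I : finType) (u : I -> V) t v : 0 <= t -> gen_cone u v -> gen_cone u (t *: v).
Proof.
move=> t0 [nu [nu0 ->]]; exists (fun i => t * nu i); split; first by move=> i; rewrite mulr_ge0.
by rewrite scaler_sumr; apply: eq_bigr => i _; rewrite scalerA.
Qed.

Lemma gen_cone_gen (I : finType) (u : I -> V) i : gen_cone u (u i).
Proof.
by exists (fun i' => (i' == i)%:R); split; [move=> i'; case: (_ == _)|rewrite sum_deltaZ].
Qed.

Lemma gen_cone_dotv_le0 (I : finType) (u : I -> V) y v :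
  (forall i, dotv (u i) y <= 0) -> gen_cone u v -> dotv v y <= 0.
Proof.
move=> hu [nu [nu0 ->]]; rewrite dotv_suml; apply: sumr_le0 => i _.
by rewrite dotvZl mulr_ge0_le0.
Qed.

Lemma farkas (I : finType) (u : I -> V) v :
  (forall y, (forall i, dotv (u i) y <= 0) -> dotv v y <= 0) -> gen_cone u v.
Proof.
move=> hv; apply/gen_cone_convcone; apply: convcone_farkas => y k hk hu.
by have := hk tt; rewrite dotv0l add0r => k0; rewrite -[0]addr0 lerD // hv.
Qed.

Lemma polar_gen_cone (I : finType) (u : I -> V) v :
  (forall w, (forall i, dotv (u i) w <= 0) -> dotv v w <= 0) <-> gen_cone u v.
Proof.
split; first exact: farkas.
by move=> uv w uw; apply: gen_cone_dotv_le0 uv.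
Qed.

Lemma halfspace_cone_finitely_generated (I : finType) (d : I -> V) :
  exists (I' : finType) (u : I' -> V),
    forall w, (forall i, dotv (d i) w <= 0) <-> gen_cone u w.
Proof.
have [I' [y [k h]]] := convcone_polyhedral (fun _ : unit => 0) d.
have hC v : gen_cone d v <-> forall j, dotv (y j) v + k j <= 0 by rewrite gen_cone_convcone.
have k0 j : k j <= 0 by have := (hC 0).1 (gen_cone0 d) j; rewrite dotv0r add0r.
have yd j i : dotv (d i) (y j) <= 0.
  rewrite dotvC; apply: (@ray_le0 _ (k j)) => t t0.
  by have := (hC _).1 (gen_coneZ t0 (gen_cone_gen d i)) j; rewrite dotvZr.
exists I', y => w; split=> [hw|yw i].
  apply: farkas => z hz; rewrite dotvC; apply: (gen_cone_dotv_le0 hw).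
  by apply/hC => j; rewrite -[0]addr0 lerD ?hz ?k0.
by rewrite dotvC; apply: gen_cone_dotv_le0 yw => j; rewrite dotvC yd.
Qed.

Lemma gen_cone_sub (J1 J2 : finType) (a : J1 -> V) (b : J2 -> V) x :
  (exists x1 x2, [/\ gen_cone a x1, gen_cone b x2 & x = x1 - x2]) <->
  gen_cone (fun s => match s with inl i => a i | inr j => - b j end) x.
Proof.
split=> [[x1 [x2 [[n1 [n10 ->]] [n2 [n20 ->]] ->]]]|[n [n0 ->]]].
  exists (fun s => match s with inl i => n1 i | inr j => n2 j end); split; first by case.
  rewrite big_sumType /= -sumrN; congr (_ + _); apply: eq_bigr => j _.
  by rewrite scalerN.
rewrite big_sumType /=.
exists (\sum_i n (inl i) *: a i), (\sum_j n (inr j) *: b j); split.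
- by exists (fun i => n (inl i)).
- by exists (fun j => n (inr j)).
by rewrite -sumrN; congr (_ + _); apply: eq_bigr => j _; rewrite scalerN.
Qed.

Definition closedv (S : set V) :=
  forall v, (forall e, 0 < e -> exists u, S u /\ nrmv (u - v) < e) -> S v.

Lemma polar_closed (P : V -> Prop) : closedv [set v | forall y, P y -> dotv v y <= 0].
Proof.
move=> v hv y Py; rewrite leNgt; apply/negP => pos.
have L0 := norm1v_ge0 y.
have [u [Su hu]] := hv (dotv v y / (norm1v y + 1)) (divr_gt0 pos (ltr_wpDl L0 ltr01)).
have := Su y Py; rewrite dotvC => uy.
have := dotv_lipschitz y v u; rewrite nrmv_subC dotvC => vy.
have : norm1v y * nrmv (u - v) <= norm1v y * (dotv v y / (norm1v y + 1)).
  by rewrite ler_wpM2l // ltW.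
have : norm1v y * (dotv v y / (norm1v y + 1)) < dotv v y.
  by rewrite mulrA ltr_pdivrMr; [nra|lra].
lra.
Qed.

Lemma gen_cone_closed (I : finType) (u : I -> V) : closedv (gen_cone u).
Proof.
move=> v hv; apply: farkas => y hy.
apply: (@polar_closed (fun y => forall i, dotv (u i) y <= 0) v _ y hy) => e e0.
have [w [uw hw]] := hv e e0; exists w; split => // y' hy'.
exact: gen_cone_dotv_le0 uw.
Qed.

(* [k <= 0] puts 0 in the polyhedron, which then coincides with a cone near 0. *)
Lemma polyhedron_locally_conic (I : finType) (y : I -> V) (k : I -> R) :
  (forall j, k j <= 0) ->
  exists2 eps, 0 < eps & forall v s, nrmv v < eps -> 0 < s ->
    (forall j, dotv (y j) (s *: v) + k j <= 0) -> forall j, dotv (y j) v + k j <= 0.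
Proof.
move=> k0; pose r j := - k j / (norm1v (y j) + 1).
have r0 j : k j < 0 -> 0 < r j.
  by move=> kj; rewrite divr_gt0 ?oppr_gt0 // ltr_wpDl // norm1v_ge0.
exists (\big[Num.min/1]_(j | k j < 0) r j) => [|v s hv s0 hs j].
  by apply: lt_bigmin => // j /r0.
have [kj|kj] := ltP (k j) 0; last first.
  have kj0 : k j = 0 by apply/eqP; rewrite eq_le k0.
  move: (hs j); rewrite kj0 !addr0 dotvZr pmulr_rle0 //.
have vr : nrmv v < r j by apply: lt_le_trans hv _; exact: bigmin_le_cond.
have L0 := norm1v_ge0 (y j).
have := dotv_le_norm (y j) v.
have : norm1v (y j) * nrmv v <= norm1v (y j) * r j by rewrite ler_wpM2l // ltW.
have : norm1v (y j) * r j <= - k j by rewrite /r mulrA ler_pdivrMr; nra.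
lra.
Qed.

End Polyhedra.

(** * Sets that are locally a translated cone *)

Lemma exists_small_step (R : realType) (M N : R) : 0 < M -> 0 <= N ->
  exists2 t, 0 < t & t < M /\ t * N < M.
Proof.
move=> M0 N0; exists (M / (N + 1) / 2); first by rewrite !divr_gt0 //; lra.
have e : M / (N + 1) / 2 * (N + 1) = M / 2 by field; lra.
by split; nra.
Qed.

Section LocalModels.
Variables (R : realType) (m : nat).
Notation Pt := ('rV[R]_m * 'rV[R]_m)%type.
Implicit Types (p q v : Pt) (S G : set Pt).

Definition pclosed G :=
  forall p, (forall e, 0 < e -> exists q, G q /\ pdist q p < e) -> G p.

Definition pcone G := G pzero /\ forall t p, 0 < t -> G p -> G (pscale t p).

Definition locally_eq S G p d := forall q, pdist q p < d -> (S q <-> G (psub q p)).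

Lemma pdist_quotient_le t q p v e : 0 < t -> e <= 1 ->
  pdist (pscale t^-1 (psub q p)) v < e -> pdist q p <= t * (pnorm v + 1).
Proof.
move=> t0 e1 h; rewrite pdistE (le_trans (pnorm_le_near t0 h)) //.
by rewrite ler_pM2l // lerD2l.
Qed.

Lemma tangent_cone_sub S G p d : 0 < d -> locally_eq S G p d -> pclosed G -> pcone G ->
  tangent_cone S p `<=` G.
Proof.
move=> d0 hl Gc [_ Gs] v hv; apply: Gc => e e0; have pv := pnorm_ge0 v.
have e1 : 0 < Num.min e 1 by rewrite lt_min e0 ltr01.
have r0 : 0 < d / (pnorm v + 1) by rewrite divr_gt0 //; lra.
have [t [q [/andP[t0 td] [Sq hq]]]] := hv _ _ e1 r0.
exists (pscale t^-1 (psub q p)); split; last by exact: lt_le_trans hq (min_le_l _ _).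
apply: Gs; first by rewrite invr_gt0.
apply/(hl q) => //; apply: le_lt_trans (pdist_quotient_le t0 (min_le_r _ _) hq) _.
by rewrite -ltr_pdivlMr //; lra.
Qed.

Lemma cone_sub_tangent S G p d : 0 < d -> locally_eq S G p d -> pcone G ->
  G `<=` tangent_cone S p.
Proof.
move=> d0 hl [_ Gs] v Gv e d' e0 d'0.
have M0 : 0 < Num.min d' d by rewrite lt_min d'0 d0.
have [t t0 [td' tv]] := exists_small_step M0 (pnorm_ge0 v).
move: td'; rewrite lt_min => /andP[td' _].
exists t, (padd p (pscale t v)); split; first by rewrite t0 td'.
split; last by rewrite psub_padd pscaleK ?gt_eqF // pdistxx.
apply/hl; last by rewrite psub_padd; apply: Gs.
by rewrite pdist_padd pnormZ ?ltW // (lt_le_trans tv (min_le_r _ _)).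
Qed.

Lemma sgderiv_sub_mdiff S G p d : 0 < d -> locally_eq S G p d -> pcone G ->
  pclosed (mdiff G G) -> gph_sgderiv S p `<=` mdiff G G.
Proof.
move=> d0 hl [_ Gs] Gc v hv; apply: Gc => e e0; have pv := pnorm_ge0 v.
have e1 : 0 < Num.min e 1 by rewrite lt_min e0 ltr01.
pose r := d / (pnorm v + 2).
have r0 : 0 < r by rewrite divr_gt0 //; lra.
have rd : r * (pnorm v + 2) = d by rewrite /r mulfVK //; rewrite gt_eqF //; lra.
have [t [q [q' [/andP[t0 tr] [Sq [qp [Sq' hq']]]]]]] := hv _ _ e1 r0.
have q'q := pdist_quotient_le t0 ((min_le_r _ _)) hq'.
have Gq : G (psub q p) by apply/(hl q) => //; nra.
have Gq' : G (psub q' p).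
  apply/(hl q') => //; apply: le_lt_trans (pdist_triangle q' q p) _; nra.
exists (pscale t^-1 (psub q' q)); split; last by exact: lt_le_trans hq' (min_le_l _ _).
exists (pscale t^-1 (psub q' p)), (pscale t^-1 (psub q p)).
by split; [|split]; rewrite -?psub_trans //; apply: Gs; rewrite ?invr_gt0.
Qed.

Lemma mdiff_sub_sgderiv S G p d : 0 < d -> locally_eq S G p d -> pcone G ->
  mdiff G G `<=` gph_sgderiv S p.
Proof.
move=> d0 hl [_ Gs] _ [a [b [Ga [Gb ->]]]] e d' e0 d'0.
have M0 : 0 < Num.min d' d by rewrite lt_min d'0 d0.
have N0 : 0 <= pnorm a + pnorm b by rewrite addr_ge0 ?pnorm_ge0.
have [t t0 [tM tN]] := exists_small_step M0 N0.
have near x : 0 <= pnorm x <= pnorm a + pnorm b ->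
    pdist (padd p (pscale t x)) p < Num.min d' d.
  by case/andP=> x0 xN; rewrite pdist_padd pnormZ ?ltW //; nra.
have Sp x : G x -> 0 <= pnorm x <= pnorm a + pnorm b -> S (padd p (pscale t x)).
  move=> Gx /near xd; apply/hl; first exact: lt_le_trans xd (min_le_r _ _).
  by rewrite psub_padd; apply: Gs.
have ha : 0 <= pnorm a <= pnorm a + pnorm b by rewrite pnorm_ge0 lerDl pnorm_ge0.
have hb : 0 <= pnorm b <= pnorm a + pnorm b by rewrite pnorm_ge0 lerDr pnorm_ge0.
exists t, (padd p (pscale t b)), (padd p (pscale t a)).
split; first by rewrite t0 (lt_le_trans tM (min_le_l _ _)).
split; first exact: Sp.
split; first exact: lt_le_trans (near _ hb) (min_le_l _ _).
split; first exact: Sp.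
by rewrite psub_padd2 psub_pscale pscaleK ?gt_eqF // pdistxx.
Qed.

Lemma tangent_cone_locally_eq S G p d : 0 < d -> locally_eq S G p d -> pclosed G ->
  pcone G -> tangent_cone S p = G.
Proof.
move=> d0 hl Gc Gk; apply/seteqP; split; first exact: tangent_cone_sub hl Gc Gk.
exact: cone_sub_tangent hl Gk.
Qed.

Lemma sgderiv_locally_eq S G p d : 0 < d -> locally_eq S G p d -> pcone G ->
  pclosed (mdiff G G) -> gph_sgderiv S p = mdiff G G.
Proof.
move=> d0 hl Gk Gc; apply/seteqP; split; first exact: sgderiv_sub_mdiff hl Gk Gc.
exact: mdiff_sub_sgderiv hl Gk.
Qed.

Lemma sgderiv_inner_sub S p : S p -> gph_sgderiv_inner S p `<=` gph_sgderiv S p.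
Proof.
move=> Sp v hv e d' e0 d'0; have [d [d0 hd]] := hv e e0.
have M0 : 0 < Num.min d d' by rewrite lt_min d0 d'0.
have [t t0 [tM _]] := exists_small_step M0 (lexx 0).
have td : 0 < t < d by rewrite t0 (lt_le_trans tM (min_le_l _ _)).
have [q' [Sq' hq']] := hd t p td Sp (ltac:(by rewrite pdistxx)).
by exists t, p, q'; rewrite t0 pdistxx (lt_le_trans tM (min_le_r _ _)).
Qed.

Lemma cone_sub_sgderiv_inner S G p d : 0 < d -> locally_eq S G p d -> pcone G ->
  (forall a b, G a -> G b -> G (padd a b)) -> G `<=` gph_sgderiv_inner S p.
Proof.
move=> d0 hl [_ Gs] Gadd v Gv e e0; have pv := pnorm_ge0 v.
pose r := d / (2 * (pnorm v + 1)).
have r0 : 0 < r by rewrite divr_gt0 // mulr_gt0 //; lra.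
have rv : r * (pnorm v + 1) = d / 2 by rewrite /r; field; lra.
exists r; split => // t q /andP[t0 tr] Sq qp.
exists (padd q (pscale t v)); split; last by rewrite psub_padd pscaleK ?gt_eqF // pdistxx.
have qv : psub (padd q (pscale t v)) p = padd (psub q p) (pscale t v).
  by rewrite /psub /padd /=; congr (_, _); rewrite addrAC.
have Gq : G (psub q p) by apply/(hl q) => //; nra.
apply/hl; last by rewrite qv; apply: Gadd => //; apply: Gs.
rewrite pdistE qv; apply: le_lt_trans (pnormD _ _) _.
rewrite pnormZ ?ltW // -pdistE; nra.
Qed.

Lemma locally_eq_shift S G p d q0 : locally_eq S G p d ->
  (forall a b, G a -> G b -> G (padd a b)) -> (forall a b, G a -> G b -> G (psub a b)) ->
  S q0 -> pdist q0 p < d / 2 -> locally_eq S G q0 (d / 2).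
Proof.
move=> hl Gadd Gsub Sq0 q0p q hq.
have qp : pdist q p < d by apply: le_lt_trans (pdist_triangle q q0 p) _; lra.
have Gq0 : G (psub q0 p) by apply/(hl q0) => //; have := pdist_ge0 q0 p; lra.
have e1 : psub q p = padd (psub q q0) (psub q0 p).
  by rewrite /psub /padd /=; congr (_, _); rewrite addrA subrK.
have e2 : psub q q0 = psub (psub q p) (psub q0 p).
  by rewrite /psub /=; congr (_, _); rewrite opprB addrA subrK.
rewrite (hl q qp) e1; split=> [Gqp|Gqq0]; last exact: Gadd.
by rewrite e2; apply: Gsub => //; rewrite e1.
Qed.

Lemma pclosed_bigcup (I : finType) (Q : I -> set Pt) :
  (forall i, pclosed (Q i)) -> pclosed (fun p => exists i, Q i p).
Proof.
move=> Qc p hp; apply: contrapT => hn.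
have h i : exists e, 0 < e /\ forall q, Q i q -> e <= pdist q p.
  apply: contrapT => hn2; apply: hn; exists i; apply: Qc => e e0.
  apply: contrapT => hn3; apply: hn2; exists e; split => // q Qq.
  by rewrite leNgt; apply/negP => lt; apply: hn3; exists q.
have [f hf] := choice h.
have [|q [[i Qq] hq]] := hp (\big[Num.min/1]_i f i).
  by apply: lt_bigmin => // i _; case: (hf i).
have := (hf i).2 q Qq; have : \big[Num.min/1]_i f i <= f i by exact: bigmin_le.
lra.
Qed.

Lemma pclosed_prod (A B : set 'rV[R]_m) :
  closedv A -> closedv B -> pclosed (fun p => A p.1 /\ B p.2).
Proof.
move=> hA hB [x y] hp; split => /=.
  apply: hA => e e0; have [[x' y'] [[Ax _] h]] := hp e e0.
  by exists x'; split => //; apply: le_lt_trans (nrmv1_le_pdist _ _) h.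
apply: hB => e e0; have [[x' y'] [[_ By] h]] := hp e e0.
by exists y'; split => //; apply: le_lt_trans (nrmv2_le_pdist _ _) h.
Qed.

Lemma pclosed_union_gen_cones (J : finType) (P : J -> set Pt) :
  (forall j, exists (I1 I2 : finType) (u1 : I1 -> 'rV[R]_m) (u2 : I2 -> 'rV[R]_m),
     forall p, P j p <-> gen_cone u1 p.1 /\ gen_cone u2 p.2) ->
  pclosed (fun p => exists j, P j p).
Proof.
move=> hP; apply: pclosed_bigcup => j p hp.
have [I1 [I2 [u1 [u2 Pj]]]] := hP j; apply/Pj.
apply: (pclosed_prod (@gen_cone_closed _ _ _ u1) (@gen_cone_closed _ _ _ u2)) => e e0.
by have [q [Pq qp]] := hp e e0; exists q; rewrite -Pj.
Qed.

End LocalModels.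

(** * Normal cones of convex and polyhedral cones *)

Section NormalConeOfCone.
Variables (R : realType) (m : nat) (K : set 'rV[R]_m).
Hypothesis K0 : K 0.
Hypothesis KD : forall u w, K u -> K w -> K (u + w).
Hypothesis KZ : forall t w, 0 <= t -> K w -> K (t *: w).
Notation G := (gph_normal_cone K).

Lemma gph_normal_coneP w v :
  G (w, v) <-> [/\ K w, forall u, K u -> dotv v u <= 0 & dotv v w = 0].
Proof.
split=> [[/= Kw hv]|[Kw hv vw]]; last by split => // u Ku /=; rewrite dotvBr vw subr0 hv.
have polar u : K u -> dotv v u <= 0.
  by move=> Ku; have := hv (w + u) (KD Kw Ku); rewrite /= (addrC w u) addrK.
split => //; apply/eqP; rewrite eq_le polar //=.
by have := hv 0 K0; rewrite sub0r dotvNr oppr_le0.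
Qed.

Lemma gph_normal_cone_cone : pcone G.
Proof.
split; first by apply/gph_normal_coneP; split; rewrite // ?dotv0r // => u _; rewrite dotv0l.
move=> t [w v] t0 /gph_normal_coneP [Kw hv vw]; apply/gph_normal_coneP.
split; first exact/KZ/Kw/ltW.
  by move=> u Ku; rewrite /= dotvZl pmulr_rle0 // hv.
by rewrite /= dotvZl dotvZr vw !mulr0.
Qed.

Section Subspace.
Hypothesis KN : forall w, K w -> K (- w).

Lemma gph_normal_subspaceP p : G p <-> K p.1 /\ forall u, K u -> dotv p.2 u = 0.
Proof.
case: p => w v; rewrite gph_normal_coneP /=; split=> [[Kw hv _]|[Kw hv]].
  split => // u Ku; apply/eqP; rewrite eq_le hv //=.
  by have := hv _ (KN Ku); rewrite dotvNr oppr_le0.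
by split => // [u Ku|]; rewrite hv.
Qed.

Lemma gph_normal_subspaceD p q : G p -> G q -> G (padd p q).
Proof.
move=> /gph_normal_subspaceP [K1 h1] /gph_normal_subspaceP [K2 h2].
apply/gph_normal_subspaceP; split; first exact: KD.
by move=> u Ku; rewrite /= dotvDl h1 // h2 // addr0.
Qed.

Lemma gph_normal_subspaceB p q : G p -> G q -> G (psub p q).
Proof.
move=> /gph_normal_subspaceP [K1 h1] /gph_normal_subspaceP [K2 h2].
apply/gph_normal_subspaceP; split; first exact: KD (KN K2).
by move=> u Ku; rewrite /= dotvBl h1 // h2 // subr0.
Qed.

Lemma mdiff_gph_normal_subspace : mdiff G G = G.
Proof.
apply/seteqP; split=> [_ [p [q [Gp [Gq ->]]]]|p Gp]; first exact: gph_normal_subspaceB.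
exists p, pzero; split => //; split; first by case: gph_normal_cone_cone.
by case: p {Gp} => p1 p2; rewrite /psub /= !subr0.
Qed.

End Subspace.
End NormalConeOfCone.

Section PolyhedralCone.
Variables (R : realType) (m : nat) (I : finType) (c : I -> 'rV[R]_m).
Notation V := 'rV[R]_m.

Definition polycone : set V := [set w | forall k, dotv (c k) w <= 0].
Notation G := (gph_normal_cone polycone).

Lemma polycone0 : polycone 0.
Proof. by move=> k; rewrite dotv0r. Qed.

Lemma polyconeD u w : polycone u -> polycone w -> polycone (u + w).
Proof. by move=> hu hw k; rewrite dotvDr -[0]addr0 lerD. Qed.

Lemma polyconeZ t w : 0 <= t -> polycone w -> polycone (t *: w).
Proof. by move=> t0 hw k; rewrite dotvZr mulr_ge0_le0. Qed.

Lemma gph_normal_polycone_cone : pcone G.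
Proof. by apply: gph_normal_cone_cone; [exact: polycone0|exact: polyconeD|exact: polyconeZ]. Qed.

Definition face (I1 : {set I}) : set V :=
  [set w | polycone w /\ forall k, k \in I1 -> dotv (c k) w = 0].

Definition active_gens (I1 : {set I}) (k : I) : V := if k \in I1 then c k else 0.

Lemma gph_normal_polycone_faces w v :
  G (w, v) <-> exists I1, face I1 w /\ gen_cone (active_gens I1) v.
Proof.
rewrite gph_normal_coneP; [|exact: polycone0|exact: polyconeD].
split=> [[Kw /polar_gen_cone [nu [nu0 ev]] vw]|[I1 [[Kw hw] [nu [nu0 ev]]]]].
  have act k : nu k * dotv (c k) w = 0.
    have : \sum_k nu k * dotv (c k) w = 0.
      by rewrite -[RHS]vw ev dotv_suml; apply: eq_bigr => l _; rewrite dotvZl.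
    move/eqP; rewrite -oppr_eq0 -sumrN psumr_eq0 => [/allP/(_ k (mem_index_enum k))|k' _].
      by rewrite oppr_eq0 => /eqP.
    by rewrite oppr_ge0 mulr_ge0_le0.
  exists (finset (fun k => dotv (c k) w == 0)); split; first by split=> // k; rewrite inE => /eqP.
  exists nu; split => //; rewrite ev; apply: eq_bigr => k _; rewrite /active_gens inE.
  have [//|ck] := eqVneq (dotv (c k) w) 0.
  by move/eqP: (act k); rewrite mulf_eq0 (negbTE ck) orbF => /eqP ->; rewrite !scale0r.
split=> //.
  apply/polar_gen_cone; exists (fun k => if k \in I1 then nu k else 0); split.
    by move=> k; case: ifP.
  by rewrite ev; apply: eq_bigr => k _; rewrite /active_gens; case: ifP; rewrite ?scale0r ?scaler0.
rewrite ev dotv_suml; apply: big1 => k _; rewrite dotvZl /active_gens.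
by case: ifP => [/hw ->|_]; rewrite ?dotv0l mulr0.
Qed.

Lemma face_finitely_generated I1 :
  exists (J : finType) (u : J -> V), forall w, face I1 w <-> gen_cone u w.
Proof.
pose d (s : I + I) : V :=
  match s with inl k => c k | inr k => if k \in I1 then - c k else 0 end.
have [J [u hu]] := halfspace_cone_finitely_generated d; exists J, u => w; rewrite -hu.
split=> [[Kw hw] [k|k] /=|h]; first exact: Kw.
  by case: ifP => [/hw|_]; rewrite ?dotvNl ?dotv0l // => ->; rewrite oppr0.
split=> [k|k kI]; first exact: (h (inl k)).
by apply/eqP; rewrite eq_le (h (inl k)) /=; have := h (inr k); rewrite /= kI dotvNl oppr_le0.
Qed.

Lemma gph_normal_polycone_closed : pclosed G.
Proof.
have -> : G = (fun p => exists I1, face I1 p.1 /\ gen_cone (active_gens I1) p.2).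
  by apply/funext => -[w v]; apply/propext; rewrite gph_normal_polycone_faces.
apply: pclosed_union_gen_cones => I1; have [J [u hu]] := face_finitely_generated I1.
by exists J, I, u, (active_gens I1) => p; rewrite hu.
Qed.

Lemma mdiff_gph_normal_polycone_closed : pclosed (mdiff G G).
Proof.
pose FC (I1 : {set I}) p := face I1 p.1 /\ gen_cone (active_gens I1) p.2.
have -> : mdiff G G = (fun p => exists I12 : {set I} * {set I},
    exists a b, [/\ FC I12.1 a, FC I12.2 b & p = psub a b]).
  apply/funext => p; apply/propext; split=> [[a [b [Ga [Gb ->]]]]|[[I1 I2] [a [b [Fa Fb ->]]]]].
    move: Ga Gb; case: a => [w1 v1]; case: b => [w2 v2].
    move=> /gph_normal_polycone_faces [I1 F1] /gph_normal_polycone_faces [I2 F2].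
    by exists (I1, I2), (w1, v1), (w2, v2).
  exists a, b; case: a Fa => w1 v1 Fa; case: b Fb => w2 v2 Fb.
  by split; [|split]; rewrite // gph_normal_polycone_faces; [exists I1|exists I2].
apply: pclosed_union_gen_cones => -[I1 I2].
have [J1 [u1 hu1]] := face_finitely_generated I1.
have [J2 [u2 hu2]] := face_finitely_generated I2.
do 2 eexists; exists (fun s => match s with inl i => u1 i | inr j => - u2 j end).
exists (fun s => match s with inl i => active_gens I1 i | inr j => - active_gens I2 j end).
move=> [w v]; rewrite /= -!gen_cone_sub; split.
  move=> [[w1 v1] [[w2 v2] [[/= F1 C1] [/= F2 C2] [-> ->]]]].
  by split; [exists w1, w2; split; [exact/hu1|exact/hu2|]|exists v1, v2].
move=> [[w1 [w2 [/hu1 W1 /hu2 W2 ->]]] [v1 [v2 [V1 V2 ->]]]].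
by exists (w1, v1), (w2, v2).
Qed.

End PolyhedralCone.

(** * Local structure of a polyhedral function *)

Section PolyhedralFunction.
Variables (R : realType) (m : nat) (g : 'rV[R]_m -> \bar R) (k : nat).
Variables (a : 'I_k -> 'rV[R]_m) (b c : 'I_k -> R) (zb lb : 'rV[R]_m).
Notation V := 'rV[R]_m.
Hypothesis epi_g : epigraph g = [set p | forall i, dotv (a i) p.1 + b i * p.2 <= c i].
Hypothesis g_neq_ninfty : forall x, g x <> -oo%E.
Hypothesis lb_subgrad : subdiff g zb lb.

Lemma g_leP x t : (g x <= t%:E)%E <-> forall i, dotv (a i) x + b i * t <= c i.
Proof. by have := congr1 (fun S => S (x, t)) epi_g; rewrite /epigraph /= => ->. Qed.

Lemma g_eq_pinfty x : (forall t, ~ (g x <= t%:E)%E) -> g x = +oo%E.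
Proof.
move=> h; case E: (g x) => [r| |] //; last by have := g_neq_ninfty E.
by have := h r; rewrite E lexx.
Qed.

Definition gb := fine (g zb).

Lemma g_zb : g zb = gb%:E.
Proof. by rewrite /gb fineK //; case: lb_subgrad. Qed.

Definition slack i := c i - dotv (a i) zb - b i * gb.

Lemma slack_ge0 i : 0 <= slack i.
Proof.
have /g_leP/(_ i) : (g zb <= gb%:E)%E by rewrite g_zb.
by rewrite /slack; lra.
Qed.

Lemma b_le0 i : b i <= 0.
Proof.
apply: (ray_le0 (k := dotv (a i) zb + b i * gb - c i)) => t t0.
have /g_leP/(_ i) : (g zb <= (gb + t)%:E)%E by rewrite g_zb lee_fin lerDl.
lra.
Qed.

(* The constraints active at (zb, g zb) split into those bounding the graph
   ([b i < 0]) and those bounding the domain ([b i = 0]). *)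
Definition graph_active i := (slack i == 0) && (b i < 0).
Definition dom_active i := (slack i == 0) && (b i == 0).
Definition slope i : V := (- b i)^-1 *: a i.

Lemma slopeE i : graph_active i -> a i = (- b i) *: slope i.
Proof.
by case/andP=> _ bi; rewrite /slope scalerA mulfV ?scale1r // oppr_eq0 lt_eqF.
Qed.

Lemma exists_graph_active : exists i, graph_active i.
Proof.
(* [g zb] is finite, so [(zb, gb - tau)] violates some constraint, which for
   small [tau] must be active with [b i < 0] *)
pose r i := slack i / (`|b i| + 1).
have r0 i : 0 < slack i -> 0 < r i by move=> si; rewrite divr_gt0 // ltr_wpDl.
pose tau := \big[Num.min/1]_(i | 0 < slack i) r i.
have tau0 : 0 < tau by apply: lt_bigmin => // i /r0.
have : ~ (g zb <= (gb - tau)%:E)%E by rewrite g_zb lee_fin; lra.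
move/g_leP => /existsNP [i /negP]; rewrite -ltNge => hi; exists i.
have bi0 := b_le0 i; have si0 := slack_ge0 i.
have bi : b i < 0.
  by rewrite lt_neqAle bi0 andbT; apply/eqP => e; move: hi si0; rewrite /slack e; lra.
rewrite /graph_active bi andbT; apply/negPn/negP => sn.
have sp : 0 < slack i by rewrite lt_neqAle eq_sym sn.
have : tau <= r i by exact: bigmin_le_cond.
have : - b i * r i < slack i.
  by rewrite /r ltr0_norm // mulrA ltr_pdivrMr; [nra|lra].
move: hi; rewrite /slack; nra.
Qed.

Definition graph_active0 := xchoose exists_graph_active.

(* the subderivative of g at zb on its domain cone *)
Definition dirder (w : V) : R :=
  \big[Num.max/dotv (slope graph_active0) w]_(i | graph_active i) dotv (slope i) w.

Lemma dirder_ge i w : graph_active i -> dotv (slope i) w <= dirder w.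
Proof. exact: le_bigmax_cond. Qed.

Lemma dirder_attained w : exists2 i, graph_active i & dirder w = dotv (slope i) w.
Proof.
rewrite /dirder; elim/big_ind: _ => [|x y [i hi ->] [j hj ->]|i hi]; last by exists i.
  by exists graph_active0 => //; exact: xchooseP.
by rewrite /Num.max; case: ifP => _; [exists j|exists i].
Qed.

Lemma dirder_le w s : (forall i, graph_active i -> dotv (slope i) w <= s) -> dirder w <= s.
Proof. by move=> h; have [i hi ->] := dirder_attained w; apply: h. Qed.

Lemma dirderZ t w : 0 <= t -> dirder (t *: w) = t * dirder w.
Proof.
move=> t0; apply/eqP; rewrite eq_le; apply/andP; split.
  by apply: dirder_le => i hi; rewrite dotvZr ler_wpM2l // dirder_ge.
by have [i hi ->] := dirder_attained w; rewrite -dotvZr dirder_ge.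
Qed.

Lemma dirder0 : dirder 0 = 0.
Proof. by rewrite -(scale0r 0) dirderZ // mul0r. Qed.

Lemma dirderD x y : dirder (x + y) <= dirder x + dirder y.
Proof. by apply: dirder_le => i hi; rewrite dotvDr lerD // dirder_ge. Qed.

Definition dirder_lip := \sum_i norm1v (slope i).

Lemma dirder_lip_ge0 : 0 <= dirder_lip.
Proof. by apply: sumr_ge0 => i _; exact: norm1v_ge0. Qed.

Lemma dirder_lipschitz x y : dirder x <= dirder y + dirder_lip * nrmv (x - y).
Proof.
have [i hi ->] := dirder_attained x.
have : norm1v (slope i) <= dirder_lip.
  by rewrite /dirder_lip (bigD1 i) //= lerDl sumr_ge0 // => j _; exact: norm1v_ge0.
move=> /(ler_wpM2r (nrmv_ge0 (x - y))) li.
by have := dotv_lipschitz (slope i) x y; have := dirder_ge y hi; lra.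
Qed.

Lemma normr_dirder_le w : `|dirder w| <= dirder_lip * nrmv w.
Proof.
have := dirder_lipschitz w 0; have := dirder_lipschitz 0 w.
by rewrite dirder0 subr0 sub0r nrmvN !add0r ler_norml => h1 h2; apply/andP; split; lra.
Qed.

Definition dom_cone (w : V) := forall j, dom_active j -> dotv (a j) w <= 0.

Lemma dom_cone0 : dom_cone 0.
Proof. by move=> j _; rewrite dotv0r. Qed.

Lemma dom_coneD x y : dom_cone x -> dom_cone y -> dom_cone (x + y).
Proof. by move=> hx hy j hj; rewrite dotvDr -[0]addr0 lerD ?hx ?hy. Qed.

Lemma dom_coneZ t x : 0 <= t -> dom_cone x -> dom_cone (t *: x).
Proof. by move=> t0 hx j hj; rewrite dotvZr mulr_ge0_le0 ?hx. Qed.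

Lemma dom_coneZ_inv t x : 0 < t -> dom_cone (t *: x) -> dom_cone x.
Proof.
move=> t0; have ti : 0 <= t^-1 by rewrite invr_ge0 ltW.
by move=> /(dom_coneZ ti); rewrite scalerA mulVf ?gt_eqF // scale1r.
Qed.

Lemma g_pinfty_off_dom w : ~ dom_cone w -> g (zb + w) = +oo%E.
Proof.
move=> /existsNP [j /not_implyP [/andP[/eqP sj /eqP bj] /negP]]; rewrite -ltNge => pos.
apply: g_eq_pinfty => t /g_leP /(_ j).
by move: sj; rewrite /slack bj !mul0r addr0 subr0 dotvDr; lra.
Qed.

Lemma dirder_le_g w : ((gb + dirder w)%:E <= g (zb + w))%E.
Proof.
case E: (g (zb + w)) => [y| |]; [|by rewrite leey|by have := g_neq_ninfty E].
have [i hi dw] := dirder_attained w; move: (hi) => /andP[/eqP si bi].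
have /g_leP/(_ i) : (g (zb + w) <= y%:E)%E by rewrite E.
have aw : dotv (a i) w = - b i * dirder w by rewrite dw (slopeE hi) dotvZl.
rewrite lee_fin dotvDr aw; move: si; rewrite /slack; nra.
Qed.

(* the inactive constraints stay inactive on this ball *)
Definition local_radius :=
  \big[Num.min/1]_(i | slack i != 0) (slack i / (norm1v (a i) + `|b i| * dirder_lip + 1)).

Lemma local_radius_gt0 : 0 < local_radius.
Proof.
apply: lt_bigmin => // i si.
have sp : 0 < slack i by rewrite lt_neqAle eq_sym si slack_ge0.
have := norm1v_ge0 (a i); have := mulr_ge0 (normr_ge0 (b i)) dirder_lip_ge0.
by move=> h1 h2; rewrite divr_gt0 //; lra.
Qed.

Lemma constraint_local w i : nrmv w < local_radius -> dom_cone w ->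
  dotv (a i) w + b i * dirder w <= slack i.
Proof.
move=> hw Cw; have [si|si] := eqVneq (slack i) 0.
  have [bi|bi] := eqVneq (b i) 0.
    by rewrite si bi mul0r addr0 Cw // /dom_active si bi eqxx.
  have hA : graph_active i by rewrite /graph_active si eqxx lt_neqAle bi b_le0.
  rewrite si (slopeE hA) dotvZl; have := dirder_ge w hA; have := b_le0 i; nra.
have sp : 0 < slack i by rewrite lt_neqAle eq_sym si slack_ge0.
have L0 := norm1v_ge0 (a i); have B0 := mulr_ge0 (normr_ge0 (b i)) dirder_lip_ge0.
have : nrmv w < slack i / (norm1v (a i) + `|b i| * dirder_lip + 1).
  by apply: lt_le_trans hw _; exact: bigmin_le_cond.
rewrite ltr_pdivlMr; last by lra.
have := dotv_le_norm (a i) w.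
have : b i * dirder w <= `|b i| * dirder_lip * nrmv w.
  by rewrite -mulrA (le_trans (ler_norm _)) // normrM ler_wpM2l // normr_dirder_le.
have := nrmv_ge0 w; nra.
Qed.

Lemma g_local w : nrmv w < local_radius -> dom_cone w -> g (zb + w) = (gb + dirder w)%:E.
Proof.
move=> hw Cw; apply/eqP; rewrite eq_le dirder_le_g andbT; apply/g_leP => i.
by have := constraint_local i hw Cw; rewrite /slack dotvDr; lra.
Qed.

Lemma dirder_convex th x y : 0 <= th <= 1 ->
  dirder (th *: x + (1 - th) *: y) <= th * dirder x + (1 - th) * dirder y.
Proof.
by case/andP=> th0 th1; apply: le_trans (dirderD _ _) _; rewrite !dirderZ //; lra.
Qed.

Lemma g_le_convex x x' t t' th : 0 <= th <= 1 ->
  (g x <= t%:E)%E -> (g x' <= t'%:E)%E ->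
  (g (th *: x + (1 - th) *: x') <= (th * t + (1 - th) * t')%:E)%E.
Proof.
case/andP=> th0 th1 /g_leP h /g_leP h'; apply/g_leP => i.
rewrite dotvDr !dotvZr; have := h i; have := h' i => e1 e2.
have : th * (dotv (a i) x + b i * t) <= th * c i by rewrite ler_wpM2l.
have : (1 - th) * (dotv (a i) x' + b i * t') <= (1 - th) * c i by rewrite ler_wpM2l //; lra.
lra.
Qed.

Lemma subdiff_local_dirder w l : nrmv w < local_radius -> subdiff g (zb + w) l ->
  dom_cone w /\ forall x, dom_cone x -> dirder w + dotv l (x - w) <= dirder x.
Proof.
move=> hw [fin sub].
have Cw : dom_cone w by apply: contrapT => nC; move: fin; rewrite g_pinfty_off_dom.
split => // x Cx; have [th [/andP[th0 th1] hth]] := segment_start_in_ball x hw.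
have th01 : 0 <= th <= 1 by rewrite ltW.
have Cu : dom_cone (w + th *: (x - w)).
  by rewrite -convexE; apply: dom_coneD; apply: dom_coneZ => //; lra.
have := sub (zb + (w + th *: (x - w))).
have -> : zb + (w + th *: (x - w)) - (zb + w) = th *: (x - w).
  by rewrite opprD addrACA subrr add0r addrAC subrr add0r.
rewrite (g_local hw Cw) (g_local hth Cu) -EFinD lee_fin dotvZr.
have := dirder_convex x w th01; rewrite convexE => hc h.
by rewrite -(ler_pM2l th0); lra.
Qed.

Lemma dirder_local_subdiff w l : nrmv w < local_radius -> dom_cone w ->
  (forall x, dom_cone x -> dirder w + dotv l (x - w) <= dirder x) -> subdiff g (zb + w) l.
Proof.
move=> hw Cw sub; split=> [|y]; first by rewrite (g_local hw Cw).
case E: (g y) => [t| |]; [|by rewrite leey|by have := g_neq_ninfty E].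
have [th [/andP[th0 th1] hth]] := segment_start_in_ball (y - zb) hw.
have th01 : 0 <= th <= 1 by rewrite ltW.
have gw : (g (zb + w) <= (gb + dirder w)%:E)%E by rewrite (g_local hw Cw).
have gy : (g y <= t%:E)%E by rewrite E.
have := g_le_convex th01 gy gw.
have -> : th *: y + (1 - th) *: (zb + w) = zb + (w + th *: (y - zb - w)).
  by rewrite convexE addrA opprD addrA.
move=> hconv; have Cu : dom_cone (w + th *: (y - zb - w)).
  by apply: contrapT => nC; move: hconv; rewrite (g_pinfty_off_dom nC).
move: hconv; rewrite (g_local hth Cu) lee_fin.
have := sub _ Cu; rewrite (addrC w) addrK dotvZr => hs hc.
rewrite (g_local hw Cw) -EFinD lee_fin opprD addrA.
by rewrite -(ler_pM2l th0); lra.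
Qed.

Lemma subdiff_localP w l : nrmv w < local_radius ->
  subdiff g (zb + w) l <->
  dom_cone w /\ forall x, dom_cone x -> dirder w + dotv l (x - w) <= dirder x.
Proof.
move=> hw; split; first exact: subdiff_local_dirder.
by case=> Cw; apply: dirder_local_subdiff.
Qed.

Lemma dirder_subgradP w l : dom_cone w ->
  (forall x, dom_cone x -> dirder w + dotv l (x - w) <= dirder x) <->
  dirder w = dotv l w /\ forall x, dom_cone x -> dotv l x <= dirder x.
Proof.
move=> Cw; split=> [h|[-> h] x Cx]; last by rewrite dotvBr; have := h x Cx; lra.
have := h 0 dom_cone0; rewrite dirder0 sub0r dotvNr => h0.
have := h (w + w) (dom_coneD Cw Cw); rewrite addrK.
have -> : dirder (w + w) = dirder w + dirder w by rewrite -mulr2n -scaler_nat dirderZ // mulr_natl.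
move=> h2; have dw : dirder w = dotv l w by lra.
by split => // x Cx; have := h x Cx; rewrite dotvBr dw; lra.
Qed.

Lemma lb_le_dirder x : dom_cone x -> dotv lb x <= dirder x.
Proof.
have r0 : nrmv (0 : V) < local_radius by rewrite nrmv0 local_radius_gt0.
have := @subdiff_local_dirder 0 lb r0; rewrite addr0 => /(_ lb_subgrad) [_ h] Cx.
by have := h x Cx; rewrite dirder0 subr0 add0r.
Qed.

Definition minorant_shift (v : V) := forall x, dom_cone x -> dotv (lb + v) x <= dirder x.

Definition minorant_pts i : V := (if graph_active i then slope i else slope graph_active0) - lb.
Definition minorant_dirs j : V := if dom_active j then a j else 0.

Lemma minorant_shift_convcone v : minorant_shift v <-> convcone minorant_pts minorant_dirs v.
Proof.
split=> [hP|[mu [nu [mu0 nu0 mu1 ->]]] x Cx].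
  apply: convcone_farkas => y t hpts hdirs.
  have Cy : dom_cone y by move=> j hj; have := hdirs j; rewrite /minorant_dirs hj.
  have [i hi dy] := dirder_attained y.
  have := hP y Cy; have := hpts i; rewrite /minorant_pts hi /= (dotvBl (slope i)) dotvDl dy.
  by rewrite !(dotvC _ y); lra.
have pts_le i : dotv (minorant_pts i) x <= dirder x - dotv lb x.
  by rewrite dotvBl lerD2r; case: ifP => hi; apply: dirder_ge => //; exact: xchooseP.
have dirs_le j : dotv (minorant_dirs j) x <= 0.
  by rewrite /minorant_dirs; case: ifP => hj; rewrite ?dotv0l ?Cx.
rewrite !dotvDl !dotv_suml.
have : \sum_i dotv (mu i *: minorant_pts i) x <= \sum_i mu i * (dirder x - dotv lb x).
  by apply: ler_sum => i _; rewrite dotvZl ler_wpM2l.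
rewrite -mulr_suml mu1 mul1r.
have : \sum_j dotv (nu j *: minorant_dirs j) x <= 0.
  by apply: sumr_le0 => j _; rewrite dotvZl mulr_ge0_le0.
lra.
Qed.

Lemma minorant_shift_locally_conic : exists2 eps, 0 < eps &
  forall v s, nrmv v < eps -> 0 < s -> minorant_shift (s *: v) -> minorant_shift v.
Proof.
have [I' [y [t hrep]]] := convcone_polyhedral minorant_pts minorant_dirs.
have hP v : minorant_shift v <-> forall j, dotv (y j) v + t j <= 0.
  by rewrite minorant_shift_convcone hrep.
have t0 j : t j <= 0.
  have /hP/(_ j) : minorant_shift 0 by move=> x Cx; rewrite addr0 lb_le_dirder.
  by rewrite dotv0r add0r.
have [eps eps0 he] := polyhedron_locally_conic y t0.
by exists eps => // v s hv s0 /hP hs; apply/hP; exact: he hv s0 hs.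
Qed.

(* generators of the polar of the critical cone *)
Definition crit_gens (s : 'I_k + 'I_k) : V :=
  match s with
  | inl i => if graph_active i then slope i - lb else 0
  | inr j => minorant_dirs j
  end.

Notation K := (polycone crit_gens).

Lemma crit_gens_le s x : dom_cone x -> dotv (crit_gens s) x <= dirder x - dotv lb x.
Proof.
move=> Cx; have := lb_le_dirder Cx; case: s => [i|j] /=; rewrite /minorant_dirs.
  by case: ifP => hi h; rewrite ?dotv0l ?subr_ge0 // dotvBl lerD2r dirder_ge.
by case: ifP => hj h; [apply: le_trans (Cx j hj) _|rewrite dotv0l]; rewrite subr_ge0.
Qed.

Lemma polycone_crit_gensP w : K w <-> dom_cone w /\ dirder w = dotv lb w.
Proof.
split=> [h|[Cw dw] [i|j] /=]; last 2 first.
- by case: ifP => hi; rewrite ?dotv0l // dotvBl -dw subr_le0 dirder_ge.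
- by rewrite /minorant_dirs; case: ifP => hj; rewrite ?dotv0l ?Cw.
have Cw : dom_cone w by move=> j hj; have := h (inr j); rewrite /= /minorant_dirs hj.
split => //; apply/eqP; rewrite eq_le lb_le_dirder // andbT.
by apply: dirder_le => i hi; have := h (inl i); rewrite /= hi dotvBl subr_le0.
Qed.

Lemma subdiff_local_normal w v : nrmv w < local_radius ->
  (minorant_shift v -> minorant_shift (2%:R *: v)) ->
  subdiff g (zb + w) (lb + v) -> gph_normal_cone K (w, v).
Proof.
move=> hw hv2 /(subdiff_localP _ hw) [Cw /(dirder_subgradP _ Cw) [dw hP]].
have := hv2 hP w Cw; have := lb_le_dirder Cw.
rewrite dw !dotvDl dotvZl => h1 h2; have vw : dotv v w = 0 by lra.
have Kw : K w by apply/polycone_crit_gensP; rewrite dw dotvDl vw addr0.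
apply/gph_normal_coneP; [exact: polycone0|exact: polyconeD|split => // u].
by move=> /polycone_crit_gensP [Cu du]; have := hP u Cu; rewrite dotvDl du; lra.
Qed.

Lemma normal_subdiff_local w v : nrmv w < local_radius ->
  (forall s, 0 < s -> minorant_shift (s *: v) -> minorant_shift v) ->
  gph_normal_cone K (w, v) -> subdiff g (zb + w) (lb + v).
Proof.
move=> hw hvs /gph_normal_coneP [||/polycone_crit_gensP [Cw dw] /polar_gen_cone hv vw];
  [exact: polycone0|exact: polyconeD|].
apply/(subdiff_localP _ hw); split => //; apply/dirder_subgradP => //.
split; first by rewrite dotvDl vw addr0.
have [nu [nu0 ev]] := hv; pose N := \sum_s nu s.
have N0 : 0 <= N by apply: sumr_ge0.
have s0 : 0 < (N + 1)^-1 by rewrite invr_gt0; lra.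
apply: (hvs _ s0) => x Cx; have := lb_le_dirder Cx.
rewrite dotvDl dotvZl ev dotv_suml => hx.
have : \sum_s dotv (nu s *: crit_gens s) x <= N * (dirder x - dotv lb x).
  rewrite /N mulr_suml; apply: ler_sum => s _.
  by rewrite dotvZl ler_wpM2l // crit_gens_le.
move=> /(ler_wpM2l (ltW s0)); rewrite mulrA.
have : (N + 1)^-1 * N <= 1 by rewrite mulrC ler_pdivrMr; lra.
have D0 : 0 <= dirder x - dotv lb x by rewrite subr_ge0.
move=> /(ler_wpM2r D0).
lra.
Qed.

Lemma subdiff_locally_normal : exists2 d, 0 < d & forall w v, nrmv w < d -> nrmv v < d ->
  (subdiff g (zb + w) (lb + v) <-> gph_normal_cone K (w, v)).
Proof.
have [eps eps0 hcone] := minorant_shift_locally_conic.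
exists (Num.min local_radius (eps / 2)) => [|w v hw hv].
  by rewrite lt_min local_radius_gt0 divr_gt0.
have hwr := lt_le_trans hw (min_le_l _ _).
have hve : nrmv v < eps / 2 := lt_le_trans hv (min_le_r _ _).
split; last by apply: normal_subdiff_local => // s s0; apply: hcone => //; lra.
apply: subdiff_local_normal => // hP; apply: (hcone _ (2%:R)^-1).
- by rewrite nrmvZ ger0_norm //; lra.
- by rewrite invr_gt0.
- by rewrite scalerA mulVf ?pnatr_eq0 // scale1r.
Qed.

Lemma quotient_local t w : 0 < t -> nrmv (t *: w) < local_radius -> dom_cone w ->
  ((g (zb + t *: w) - g zb) * (t^-1)%:E)%E = (dirder w)%:E.
Proof.
move=> t0 hw Cw; have Ctw : dom_cone (t *: w) by apply: dom_coneZ => //; exact: ltW.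
rewrite g_local // g_zb -EFinB -EFinM.
by rewrite dirderZ ?ltW // addrC addKr mulrC mulKf ?gt_eqF.
Qed.

Lemma quotient_off_dom t w : 0 < t -> ~ dom_cone w ->
  ((g (zb + t *: w) - g zb) * (t^-1)%:E)%E = +oo%E.
Proof.
move=> t0 nC; have nCt : ~ dom_cone (t *: w) by move/(dom_coneZ_inv t0).
by rewrite g_pinfty_off_dom // g_zb; apply: gt0_mulye; rewrite lte_fin invr_gt0.
Qed.

Lemma small_steps w : exists2 e0, 0 < e0 &
  forall t (w' : V), 0 < t < e0 -> nrmv (w' - w) < e0 -> nrmv (t *: w') < local_radius.
Proof.
have nw := nrmv_ge0 w; pose e0 := Num.min 1 (local_radius / (nrmv w + 2)).
have e00 : 0 < e0 by rewrite lt_min ltr01 /= divr_gt0 ?local_radius_gt0 //; lra.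
exists e0 => // t w' /andP[t0 te] hw'.
have : nrmv w' <= nrmv w + 1.
  have := nrmvD w (w' - w); rewrite addrC subrK; have := min_le_l 1 (local_radius / (nrmv w + 2)).
  by rewrite -/e0; lra.
have : e0 * (nrmv w + 2) <= local_radius by rewrite -ler_pdivlMr ?min_le_r //; lra.
rewrite nrmvZ ger0_norm; last exact: ltW.
have := nrmv_ge0 w'; nra.
Qed.

Lemma subderiv_dom w : dom_cone w -> subderiv g zb w = (dirder w)%:E.
Proof.
move=> Cw; have [e0 e00 small] := small_steps w.
apply/eqP; rewrite eq_le; apply/andP; split.
  apply/ereal_supP => _ [e e0pos <-].
  have M0 : 0 < Num.min e e0 by rewrite lt_min e0pos e00.
  have [t t0 [tM _]] := exists_small_step M0 (lexx 0).
  have te : 0 < t < e by rewrite t0 (lt_le_trans tM (min_le_l _ _)).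
  have te0 : 0 < t < e0 by rewrite t0 (lt_le_trans tM (min_le_r _ _)).
  have ww : nrmv (w - w) < e0 by rewrite subrr nrmv0.
  rewrite -(quotient_local t0 (small _ _ te0 ww) Cw).
  by apply: ereal_inf_lbound; exists (t, w) => //=; rewrite te subrr nrmv0.
apply/lee_subgt0Pr => eta eta0; rewrite -EFinB.
have L0 := dirder_lip_ge0; pose e := Num.min e0 (eta / (dirder_lip + 1)).
have epos : 0 < e by rewrite lt_min e00 /= divr_gt0 //; lra.
apply: le_trans (ereal_sup_ubound (ex_intro2 _ _ e epos erefl)).
apply/ereal_infP => _ [[t w'] /= [/andP[t0 te] hw'] <-].
case: (pselect (dom_cone w')) => [Cw'|nC]; last by rewrite quotient_off_dom ?leey.
have te0 : 0 < t < e0 by rewrite t0 (lt_le_trans te (min_le_l _ _)).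
rewrite quotient_local ?small ?(lt_le_trans hw' (min_le_l _ _)) // lee_fin.
have : dirder_lip * nrmv (w' - w) <= dirder_lip * (eta / (dirder_lip + 1)).
  by rewrite ler_wpM2l // ltW // (lt_le_trans hw' (min_le_r _ _)).
have : dirder_lip * (eta / (dirder_lip + 1)) <= eta by rewrite mulrA ler_pdivrMr; nra.
by have := dirder_lipschitz w w'; rewrite nrmv_subC; lra.
Qed.

Lemma subderiv_off_dom w : ~ dom_cone w -> subderiv g zb w = +oo%E.
Proof.
move=> nC; move: (nC) => /existsNP [j /not_implyP [hj /negP]]; rewrite -ltNge => pos.
have L0 := norm1v_ge0 (a j); pose e := dotv (a j) w / (norm1v (a j) + 1).
have e0 : 0 < e by rewrite divr_gt0 //; lra.
apply/eqP; rewrite eq_le leey /=.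
apply: le_trans (ereal_sup_ubound (ex_intro2 _ _ e e0 erefl)).
apply/ereal_infP => _ [[t w'] /= [/andP[t0 _] hw'] <-].
rewrite quotient_off_dom // => Cw'; have := Cw' j hj.
have := dotv_lipschitz (a j) w w'; rewrite nrmv_subC.
have : norm1v (a j) * nrmv (w' - w) <= norm1v (a j) * e by rewrite ler_wpM2l // ltW.
have : norm1v (a j) * e < dotv (a j) w by rewrite mulrA ltr_pdivrMr; [nra|lra].
lra.
Qed.

Lemma critical_coneP w : critical_cone g zb lb w <-> K w.
Proof.
rewrite polycone_crit_gensP /critical_cone /=.
case: (pselect (dom_cone w)) => [Cw|nC]; last by rewrite subderiv_off_dom //; split=> [|[]].
by rewrite subderiv_dom //; split=> [[->]|[_ ->]].
Qed.

End PolyhedralFunction.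

(** * The graph of the subdifferential *)

Lemma subdiff_convex (R : realType) (m : nat) (g : 'rV[R]_m -> \bar R) z l1 l2 th :
  0 <= th <= 1 -> subdiff g z l1 -> subdiff g z l2 ->
  subdiff g z (th *: l1 + (1 - th) *: l2).
Proof.
case/andP=> th0 th1 [fz h1] [_ h2]; split => // x.
have := h1 x; have := h2 x; rewrite -(fineK fz).
case: (g x) => [t| |]; [|by move=> _ _; rewrite leey|by move=> _ /=; rewrite leeNy_eq -EFinD].
rewrite -!EFinD !lee_fin dotvDl !dotvZl => e2 e1.
have : th * (fine (g z) + dotv l1 (x - z)) <= th * t by rewrite ler_wpM2l.
have : (1 - th) * (fine (g z) + dotv l2 (x - z)) <= (1 - th) * t.
  by rewrite ler_wpM2l //; lra.
lra.
Qed.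

Section SubdifferentialGraph.
Variables (R : realType) (m : nat) (g : 'rV[R]_m -> \bar R) (zb lb : 'rV[R]_m).
Variables (I : finType) (c : I -> 'rV[R]_m) (d : R).
Notation V := 'rV[R]_m.
Notation K := (polycone c).
Notation G := (gph_normal_cone K).
Notation S := (gph_subdiff g).
Notation polar v := (forall u, K u -> dotv v u <= 0).
Hypothesis lb_subgrad : subdiff g zb lb.
Hypothesis d_gt0 : 0 < d.
Hypothesis subdiff_local : forall w v, nrmv w < d -> nrmv v < d ->
  (subdiff g (zb + w) (lb + v) <-> G (w, v)).

Lemma gph_subdiff_locally_eq : locally_eq S G (zb, lb) d.
Proof.
move=> [z l] /pdist_lt [/= hz hl]; rewrite /psub /= -(subdiff_local hz hl).
by rewrite /gph_subdiff /= !(addrC _ (_ - _)) !subrK.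
Qed.

Lemma tangent_gph_subdiff : tangent_cone S (zb, lb) = G.
Proof.
apply: tangent_cone_locally_eq d_gt0 gph_subdiff_locally_eq _ (gph_normal_polycone_cone c).
exact: gph_normal_polycone_closed.
Qed.

Lemma sgderiv_gph_subdiff : gph_sgderiv S (zb, lb) = mdiff G G.
Proof.
apply: sgderiv_locally_eq d_gt0 gph_subdiff_locally_eq (gph_normal_polycone_cone c) _.
exact: mdiff_gph_normal_polycone_closed.
Qed.

Lemma subdiff_zb_local v : nrmv v < d -> (subdiff g zb (lb + v) <-> polar v).
Proof.
move=> hv; rewrite -[zb]addr0 subdiff_local ?nrmv0 //.
rewrite gph_normal_coneP; [|exact: polycone0|exact: polyconeD].
by split=> [[]|pv] //; split; rewrite ?dotv0r //; exact: polycone0.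
Qed.

Section PolarSubspace.
Hypothesis polarN : forall v, polar v -> polar (- v).

Lemma polycone_sym w : K w -> K (- w).
Proof.
move=> Kw j; rewrite dotvNr oppr_le0.
by have := polarN (fun u Ku => Ku j) Kw; rewrite dotvNl oppr_le0.
Qed.

Lemma strictly_proto_diff_near z l : S (z, l) -> pdist (z, l) (zb, lb) < d / 2 ->
  strictly_proto_diff S (z, l) /\ gph_sgderiv S (z, l) = gph_gderiv S (z, l).
Proof.
move=> Szl hz.
have GD := gph_normal_subspaceD (polycone0 c) (@polyconeD _ _ _ c) polycone_sym.
have GB := gph_normal_subspaceB (polycone0 c) (@polyconeD _ _ _ c) polycone_sym.
have hl := locally_eq_shift gph_subdiff_locally_eq GD GB Szl hz.
have d2 : 0 < d / 2 by rewrite divr_gt0.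
have Gk := gph_normal_polycone_cone c.
have hs : gph_sgderiv S (z, l) = G.
  rewrite (sgderiv_locally_eq d2 hl Gk (@mdiff_gph_normal_polycone_closed _ _ _ c)).
  rewrite mdiff_gph_normal_subspace //; first exact: polycone0.
  - exact: polyconeD.
  - exact: polyconeZ.
  - exact: polycone_sym.
have hi : gph_sgderiv_inner S (z, l) = G.
  apply/seteqP; split; first by move=> v /(sgderiv_inner_sub Szl); rewrite hs.
  exact: cone_sub_sgderiv_inner d2 hl Gk GD.
rewrite /strictly_proto_diff /gph_gderiv hs hi; split => //.
by rewrite (tangent_cone_locally_eq d2 hl (@gph_normal_polycone_closed _ _ _ c) Gk).
Qed.

End PolarSubspace.

Lemma polarZK s v : 0 < s -> polar (s *: v) -> polar v.
Proof. by move=> s0 h u Ku; have := h u Ku; rewrite dotvZl pmulr_rle0. Qed.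

Lemma rel_int_polarN : rel_int (subdiff g zb) lb -> forall v, polar v -> polar (- v).
Proof.
move=> [_ [e [e0 hri]]] v hv; have de : 0 < Num.min d e by rewrite lt_min d_gt0 e0.
have [s s0 hs] := nrmv_scale_lt v de.
have hsd := lt_le_trans hs (min_le_l _ _); have hse := lt_le_trans hs (min_le_r _ _).
have S1 : subdiff g zb (lb + s *: v).
  by apply/subdiff_zb_local => // u Ku; rewrite dotvZl mulr_ge0_le0 ?hv ?ltW.
have /subdiff_zb_local : subdiff g zb (lb + - (s *: v)).
  (* [lb - s v = 2 lb - (lb + s v)] lies in the affine hull *)
  apply: hri; last by rewrite addrC addKr nrmvN.
  exists 2, (fun i : 'I_2 => if val i == 0 then lb else lb + s *: v),
    (fun i : 'I_2 => if val i == 0 then 2%:R else -1).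
  split; first by move=> i; case: ifP.
  split; first by rewrite !big_ord_recl big_ord0 /=; lra.
  rewrite !big_ord_recl big_ord0 /= addr0 scaleN1r opprD.
  by rewrite scaler_nat mulr2n -addrA addNKr.
by rewrite nrmvN -scalerN => /(_ hsd); apply: polarZK.
Qed.

Lemma sgderiv_eq_gderiv_polarN :
  gph_sgderiv S (zb, lb) = gph_gderiv S (zb, lb) -> forall v, polar v -> polar (- v).
Proof.
rewrite sgderiv_gph_subdiff /gph_gderiv tangent_gph_subdiff => eq v hv.
have : mdiff G G (psub pzero (0, v)).
  exists pzero, (0, v); split; first by case: (gph_normal_polycone_cone c).
  by split => //; split => [|u]; [exact: polycone0|rewrite subr0; apply: hv].
rewrite eq /psub /= subrr sub0r.
by move=> /(gph_normal_coneP (polycone0 c) (@polyconeD _ _ _ c)) [].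
Qed.

Lemma subdiff_sub_orth (orth : forall v, polar v -> forall u, K u -> dotv v u = 0) x :
  subdiff g zb x -> forall u, K u -> dotv (x - lb) u = 0.
Proof.
move=> hx; apply: orth.
have [s s0 hs] := nrmv_scale_lt (x - lb) d_gt0.
pose th := Num.min 1 s; have th0 : 0 < th by rewrite lt_min ltr01 s0.
have hth : nrmv (th *: (x - lb)) < d.
  apply: le_lt_trans hs; rewrite !nrmvZ ler_wpM2r ?nrmv_ge0 //.
  by rewrite !ger0_norm ?min_le_r ?ltW.
have th01 : 0 <= th <= 1 by rewrite ltW // min_le_l.
have := subdiff_convex th01 hx lb_subgrad.
by rewrite convexE => /(subdiff_zb_local hth); apply: polarZK.
Qed.

Lemma orth_rel_int : (forall v, polar v -> forall u, K u -> dotv v u = 0) ->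
  rel_int (subdiff g zb) lb.
Proof.
move=> orth; split=> //; exists d; split => // y [n [pts [mu [hpts [mu1 ey]]]]] hy.
have ey' : y - lb = \sum_i mu i *: (pts i - lb).
  rewrite ey -[X in _ - X]scale1r -mu1 scaler_suml -sumrB.
  by apply: eq_bigr => i _; rewrite scalerBr.
have := (subdiff_zb_local hy).2; rewrite subrKC; apply => u Ku.
rewrite ey' dotv_suml; apply: sumr_le0 => i _.
by rewrite dotvZl (subdiff_sub_orth orth (hpts i)) // mulr0.
Qed.

Lemma rel_int_subdiffP : rel_int (subdiff g zb) lb <->
  exists d', 0 < d' /\ forall z l, S (z, l) -> pdist (z, l) (zb, lb) < d' ->
    strictly_proto_diff S (z, l) /\ gph_sgderiv S (z, l) = gph_gderiv S (z, l).
Proof.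
split=> [/rel_int_polarN polarN|[d' [d'0 h]]].
  exists (d / 2); split; first by rewrite divr_gt0.
  by move=> z l; apply: strictly_proto_diff_near.
have [_ /sgderiv_eq_gderiv_polarN polarN] := h zb lb lb_subgrad (ltac:(by rewrite pdistxx)).
apply: orth_rel_int => v hv u Ku; apply/eqP; rewrite eq_le hv //=.
by have := polarN v hv u Ku; rewrite dotvNl oppr_le0.
Qed.

End SubdifferentialGraph.

Unset Implicit Arguments. Set Strict Implicit. Set Printing Implicit Defensive.

Theorem theorem3p5 (R : realType) (m : nat) (g : 'rV[R]_m -> \bar R)
    (zb lb : 'rV[R]_m) :
  polyhedral_fun g -> subdiff g zb lb ->
  (* (a) *)
  (gph_gderiv (gph_subdiff g) (zb, lb) = tangent_cone (gph_subdiff g) (zb, lb) /\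
   tangent_cone (gph_subdiff g) (zb, lb) =
     gph_normal_cone (critical_cone g zb lb)) /\
  (* (b) *)
  gph_sgderiv (gph_subdiff g) (zb, lb) =
    mdiff (gph_normal_cone (critical_cone g zb lb))
          (gph_normal_cone (critical_cone g zb lb)) /\
  (* (c) *)
  (rel_int (subdiff g zb) lb <->
   exists d : R, 0 < d /\
     forall z l : 'rV[R]_m, gph_subdiff g (z, l) -> pdist (z, l) (zb, lb) < d ->
       strictly_proto_diff (gph_subdiff g) (z, l) /\
       gph_sgderiv (gph_subdiff g) (z, l) = gph_gderiv (gph_subdiff g) (z, l)).
Proof.
move=> [[g_ninfty _] [k [a [b [c epi_g]]]]] lb_subgrad.
rewrite (funext (fun w => propext (critical_coneP epi_g g_ninfty lb_subgrad w))).
have [d d0 hL] := subdiff_locally_normal epi_g g_ninfty lb_subgrad.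
split; first by split; last exact: tangent_gph_subdiff d0 hL.
split; first exact: sgderiv_gph_subdiff d0 hL.
exact: rel_int_subdiffP d0 hL.
Qed.
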